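(* Let $\Gamma\in\mathbb{R}^{p\times p}$ be a continuous-time interconnection (not necessarily connected). There exists $\alpha>0$ such that for every Riemann-integrable $Q:\mathbb{R}_{\ge0}\to\mathcal Q_n$, the solution $\mathbf x(\cdot)$ of $\dot{\mathbf x}=(\Gamma\otimes Q_t)\mathbf x$, $\mathbf x\in\mathbb{R}^{np}$, satisfies $|\mathbf x(t)|\le\alpha|\mathbf x(0)|$ for all $t\ge0$.
   Context: $|\cdot|$ is the Euclidean norm; $\otimes$ is the Kronecker product; $\mathcal Q_n$ is the set of symmetric positive semidefinite $n\times n$ real matrices. A continuous-time interconnection is $\Gamma=[\gamma_{ij}]$ with $\gamma_{ij}\ge0$ for $i\ne j$ and $\gamma_{ii}=-\sum_{j\ne i}\gamma_{ij}$. Equivalently, writing $\mathbf x=[x_1^T\cdots x_p^T]^T$, the system is $\dot x_i=Q_t\sum_{j\ne i}\gamma_{ij}(x_j-x_i)$. *)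

From Stdlib Require Import Reals Lra.
From Coquelicot Require Import Coquelicot.
Open Scope R_scope.

Fixpoint fsum (n : nat) (f : nat -> R) : R :=
  match n with
  | O => 0
  | S m => fsum m f + f m
  end.

Definition interconnection (p : nat) (Gamma : nat -> nat -> R) : Prop :=
  (forall i j, (i < p)%nat -> (j < p)%nat -> i <> j -> 0 <= Gamma i j) /\
  (forall i, (i < p)%nat ->
     Gamma i i = - fsum p (fun j => if Nat.eq_dec j i then 0 else Gamma i j)).

Definition psd_sym (n : nat) (M : nat -> nat -> R) : Prop :=
  (forall k l, (k < n)%nat -> (l < n)%nat -> M k l = M l k) /\
  (forall v : nat -> R, 0 <= fsum n (fun k => fsum n (fun l => v k * M k l * v l))).

(* A stacked vector x in R^{np}: block i (i < p), component k (k < n) is x i k.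
   Euclidean norm. *)
Definition vnorm (n p : nat) (x : nat -> nat -> R) : R :=
  sqrt (fsum p (fun i => fsum n (fun k => x i k ^ 2))).

Definition kron_apply (n p : nat) (Gamma : nat -> nat -> R) (M : nat -> nat -> R)
  (x : nat -> nat -> R) : nat -> nat -> R :=
  fun i k => fsum p (fun j => Gamma i j * fsum n (fun l => M k l * x j l)).

(* x is a solution on [0, +oo) of x' = (Gamma (x) Q_t) x, in the integral
   (Caratheodory) sense appropriate for a Riemann-integrable coefficient:
   the right-hand side is Riemann integrable on every [0,t] and
   x(t) = x(0) + int_0^t (Gamma (x) Q_s) x(s) ds. *)
Definition is_solution (n p : nat) (Gamma : nat -> nat -> R)
  (Q : R -> nat -> nat -> R) (x : R -> nat -> nat -> R) : Prop :=
  forall t, 0 <= t -> forall i k, (i < p)%nat -> (k < n)%nat ->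
    ex_RInt (fun s => kron_apply n p Gamma (Q s) (x s) i k) 0 t /\
    x t i k = x 0 i k + RInt (fun s => kron_apply n p Gamma (Q s) (x s) i k) 0 t.

From Stdlib Require Import Reals Lra Lia Bool FunctionalExtensionality Classical IndefiniteDescription.
From Coquelicot Require Import Coquelicot.
Open Scope R_scope.

(* Since [Q_t] acts only through the semi-inner product [<a, b>_t = a^T Q_t b],
   it suffices to find a symmetric [p x p] matrix [P] and constants [lam, Lam, eps > 0]
   such that, for every semi-inner product,
     lam |y|^2 <= <y, P y> <= Lam |y|^2   and   <y, P Gamma y> <= - eps |Gamma y|^2;
   then [V = x^T (P (x) I) x] does not increase along solutions and
   [|x(t)| <= sqrt (Lam / lam) |x(0)|].  Such a certificate is built by induction on
   the number of nodes.  Take a nonempty irreducible class [S] that no other node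
   listens to; the rest [A] then evolves on its own and has a certificate [P_A].  On [S]
   a positive vector [w] with [w^T Gamma_SS <= 0] (from the stationary distribution of
   a Markov generator) makes [diag w] a certificate.  If [A] feeds [S], [Gamma_SS] is
   invertible and [z = y_S - H y_A] with [Gamma_SS H = - Gamma_SA] obeys [z' = Gamma_SS z]
   up to a forcing by [(Gamma y)_A]; the form [c P_A(y_A) + P_S(z)] is a certificate for
   [c] large.  Since solutions are only given in integral form, monotonicity of [V]
   follows from [V(t) - V(s) <= C (t - s)^2]. *)

(** * Finite sums *)

Lemma fsum_ext n f g : (forall i, (i < n)%nat -> f i = g i) -> fsum n f = fsum n g.
Proof. induction n; simpl; intros H; auto. rewrite IHn; [rewrite H|]; auto. Qed.

Lemma fsum_plus n f g : fsum n (fun i => f i + g i) = fsum n f + fsum n g.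
Proof. induction n; simpl; [lra|]. rewrite IHn; lra. Qed.

Lemma fsum_minus n f g : fsum n (fun i => f i - g i) = fsum n f - fsum n g.
Proof. induction n; simpl; [lra|]. rewrite IHn; lra. Qed.

Lemma fsum_scal_l n c f : fsum n (fun i => c * f i) = c * fsum n f.
Proof. induction n; simpl; [lra|]. rewrite IHn; lra. Qed.

Lemma fsum_scal_r n c f : fsum n (fun i => f i * c) = fsum n f * c.
Proof. induction n; simpl; [lra|]. rewrite IHn; lra. Qed.

Lemma fsum_zero n : fsum n (fun _ => 0) = 0.
Proof. induction n; simpl; [lra|]. rewrite IHn; lra. Qed.

Lemma fsum_const n c : fsum n (fun _ => c) = INR n * c.
Proof. induction n; simpl fsum; [simpl; lra|]. rewrite IHn, S_INR; lra. Qed.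

Lemma fsum_le n f g : (forall i, (i < n)%nat -> f i <= g i) -> fsum n f <= fsum n g.
Proof.
  induction n; simpl; intros H; [lra|].
  specialize (IHn (fun i Hi => H i ltac:(lia))). specialize (H n ltac:(lia)). lra.
Qed.

Lemma fsum_nonneg n f : (forall i, (i < n)%nat -> 0 <= f i) -> 0 <= fsum n f.
Proof. intros H. rewrite <- (fsum_zero n). apply fsum_le; auto. Qed.

Lemma fsum_comm n m (f : nat -> nat -> R) :
  fsum n (fun i => fsum m (fun j => f i j)) = fsum m (fun j => fsum n (fun i => f i j)).
Proof. induction n; simpl; [rewrite fsum_zero; auto|]. rewrite IHn, <- fsum_plus. auto. Qed.

Lemma fsum_abs_le n f g :
  (forall i, (i < n)%nat -> Rabs (f i) <= g i) -> Rabs (fsum n f) <= fsum n g.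
Proof.
  induction n; simpl; intros H; [rewrite Rabs_R0; lra|].
  eapply Rle_trans; [apply Rabs_triang|].
  specialize (IHn (fun i Hi => H i ltac:(lia))). specialize (H n ltac:(lia)). lra.
Qed.

Lemma fsum_single n f i0 : (i0 < n)%nat ->
  (forall i, (i < n)%nat -> i <> i0 -> f i = 0) -> fsum n f = f i0.
Proof.
  induction n; intros Hi H; [lia|]. simpl. destruct (Nat.eq_dec i0 n).
  - subst. rewrite (fsum_ext n f (fun _ => 0)), fsum_zero; [lra|]. intros; apply H; lia.
  - rewrite IHn; [|lia|intros; apply H; lia]. rewrite (H n); [lra|lia|auto].
Qed.

Lemma fsum_ge_term n f i0 : (forall i, (i < n)%nat -> 0 <= f i) -> (i0 < n)%nat ->
  f i0 <= fsum n f.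
Proof.
  induction n; intros H Hi; [lia|]. simpl. destruct (Nat.eq_dec i0 n).
  - subst. assert (0 <= fsum n f) by (apply fsum_nonneg; intros; apply H; lia). lra.
  - assert (f i0 <= fsum n f) by (apply IHn; [intros; apply H|]; lia).
    specialize (H n ltac:(lia)). lra.
Qed.

Lemma finite_bound n (P : nat -> R -> Prop) :
  (forall i M M', M <= M' -> P i M -> P i M') ->
  (forall i, (i < n)%nat -> exists M, P i M) ->
  exists M, 0 <= M /\ forall i, (i < n)%nat -> P i M.
Proof.
  intros Hmono. induction n; intros H.
  - exists 0. split; [lra|]. intros; lia.
  - destruct IHn as [M [HM0 HM]]; [intros i Hi; apply H; lia|].
    destruct (H n ltac:(lia)) as [M1 HM1].
    exists (Rmax M M1). split; [eapply Rle_trans; [apply HM0|apply Rmax_l]|].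
    intros i Hi. destruct (Nat.eq_dec i n).
    + subst. eapply Hmono; [apply Rmax_r|auto].
    + eapply Hmono; [apply Rmax_l|]. apply HM; lia.
Qed.
Definition sum_in (p : nat) (X : nat -> bool) (f : nat -> R) : R :=
  fsum p (fun i => if X i then f i else 0).

Definition within (p : nat) (X : nat -> bool) : Prop := forall i, X i = true -> (i < p)%nat.

Definition setminus (X S : nat -> bool) : nat -> bool := fun i => X i && negb (S i).

Definition remove (X : nat -> bool) (i0 : nat) : nat -> bool := fun i => X i && negb (Nat.eqb i i0).

Section IndexSetSums.
Variable p : nat.

Lemma sum_in_ext X f g : (forall i, X i = true -> f i = g i) -> sum_in p X f = sum_in p X g.
Proof. intros H. apply fsum_ext. intros i _. destruct (X i) eqn:E; auto. Qed.

Lemma sum_in_plus X f g : sum_in p X (fun i => f i + g i) = sum_in p X f + sum_in p X g.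
Proof. unfold sum_in. rewrite <- fsum_plus. apply fsum_ext. intros. destruct (X i); lra. Qed.

Lemma sum_in_minus X f g : sum_in p X (fun i => f i - g i) = sum_in p X f - sum_in p X g.
Proof. unfold sum_in. rewrite <- fsum_minus. apply fsum_ext. intros. destruct (X i); lra. Qed.

Lemma sum_in_scal_l X c f : sum_in p X (fun i => c * f i) = c * sum_in p X f.
Proof. unfold sum_in. rewrite <- fsum_scal_l. apply fsum_ext. intros. destruct (X i); lra. Qed.

Lemma sum_in_scal_r X c f : sum_in p X (fun i => f i * c) = sum_in p X f * c.
Proof. unfold sum_in. rewrite <- fsum_scal_r. apply fsum_ext. intros. destruct (X i); lra. Qed.

Lemma sum_in_opp X f : sum_in p X (fun i => - f i) = - sum_in p X f.
Proof. unfold sum_in. induction p; simpl; [lra|]. rewrite IHn. destruct (X n); lra. Qed.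

Lemma sum_in_zero X : sum_in p X (fun _ => 0) = 0.
Proof. unfold sum_in. induction p; simpl; [lra|]. rewrite IHn. destruct (X n); lra. Qed.

Lemma sum_in_empty X f : (forall i, X i = false) -> sum_in p X f = 0.
Proof. intros H. rewrite <- (sum_in_zero X). apply sum_in_ext. intros i Hi. congruence. Qed.

Lemma sum_in_le X f g : (forall i, X i = true -> f i <= g i) -> sum_in p X f <= sum_in p X g.
Proof. intros H. apply fsum_le. intros. destruct (X i) eqn:E; auto; lra. Qed.

Lemma sum_in_nonneg X f : (forall i, X i = true -> 0 <= f i) -> 0 <= sum_in p X f.
Proof. intros H. rewrite <- (sum_in_zero X). apply sum_in_le; auto. Qed.

Lemma sum_in_comm X Y (f : nat -> nat -> R) :
  sum_in p X (fun i => sum_in p Y (fun j => f i j)) =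
  sum_in p Y (fun j => sum_in p X (fun i => f i j)).
Proof.
  unfold sum_in.
  transitivity (fsum p (fun i => fsum p (fun j => if X i then (if Y j then f i j else 0) else 0))).
  { apply fsum_ext. intros i _. destruct (X i); [reflexivity|now rewrite fsum_zero]. }
  rewrite fsum_comm. apply fsum_ext. intros j _. destruct (Y j).
  - apply fsum_ext. intros. destruct (X i); auto.
  - rewrite (fsum_ext p _ (fun _ => 0)); [apply fsum_zero|]. intros. destruct (X i); auto.
Qed.

Lemma sum_in_comm4 X Y (F : nat -> nat -> nat -> nat -> R) :
  sum_in p X (fun i => sum_in p X (fun j => sum_in p Y (fun s => sum_in p Y (fun t => F i j s t)))) =
  sum_in p Y (fun s => sum_in p Y (fun t => sum_in p X (fun i => sum_in p X (fun j => F i j s t)))).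
Proof.
  transitivity (sum_in p X (fun i => sum_in p Y (fun s => sum_in p X (fun j => sum_in p Y (fun t => F i j s t))))).
  { apply sum_in_ext; intros i _. apply (sum_in_comm X Y (fun j s => sum_in p Y (fun t => F i j s t))). }
  rewrite (sum_in_comm X Y (fun i s => sum_in p X (fun j => sum_in p Y (fun t => F i j s t)))).
  apply sum_in_ext; intros s _.
  transitivity (sum_in p X (fun i => sum_in p Y (fun t => sum_in p X (fun j => F i j s t)))).
  { apply sum_in_ext; intros i _. apply (sum_in_comm X Y (fun j t => F i j s t)). }
  apply (sum_in_comm X Y (fun i t => sum_in p X (fun j => F i j s t))).
Qed.

Lemma sum_in_abs_le X f g : (forall i, X i = true -> Rabs (f i) <= g i) ->
  Rabs (sum_in p X f) <= sum_in p X g.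
Proof. intros H. apply fsum_abs_le. intros. destruct (X i) eqn:E; auto. rewrite Rabs_R0; lra. Qed.

Lemma sum_in_ge_term X f i0 : within p X -> (forall i, X i = true -> 0 <= f i) -> X i0 = true ->
  f i0 <= sum_in p X f.
Proof.
  intros Hs H Hi. replace (f i0) with (if X i0 then f i0 else 0) by (rewrite Hi; auto).
  apply (fsum_ge_term p (fun i => if X i then f i else 0)); [|apply Hs; auto].
  intros. destruct (X i) eqn:E; [apply H; auto|lra].
Qed.

Lemma sum_in_nonneg_eq0 X f : within p X -> (forall i, X i = true -> 0 <= f i) ->
  sum_in p X f = 0 -> forall i, X i = true -> f i = 0.
Proof. intros Hs H Hz i Hi. pose proof (sum_in_ge_term X f i Hs H Hi). pose proof (H i Hi). lra. Qed.

Lemma sum_in_single X f i0 : within p X -> X i0 = true ->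
  (forall i, X i = true -> i <> i0 -> f i = 0) -> sum_in p X f = f i0.
Proof.
  intros Hs Hi H. unfold sum_in. rewrite (fsum_single p _ i0); [rewrite Hi; auto|apply Hs; auto|].
  intros i _ Hne. destruct (X i) eqn:E; auto.
Qed.

Lemma sum_in_delta X f i0 : within p X -> X i0 = true ->
  sum_in p X (fun j => (if Nat.eqb i0 j then 1 else 0) * f j) = f i0.
Proof.
  intros Hs Hi. rewrite (sum_in_single X _ i0 Hs Hi); [rewrite Nat.eqb_refl; lra|].
  intros i _ Hne. destruct (Nat.eqb i0 i) eqn:E; [apply Nat.eqb_eq in E; lia|lra].
Qed.

Lemma sum_in_split X Y f :
  sum_in p X f = sum_in p (fun i => X i && Y i) f + sum_in p (fun i => X i && negb (Y i)) f.
Proof. unfold sum_in. rewrite <- fsum_plus. apply fsum_ext. intros. destruct (X i), (Y i); simpl; lra. Qed.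

Lemma sum_in_setminus X S f : (forall i, S i = true -> X i = true) ->
  sum_in p X f = sum_in p S f + sum_in p (setminus X S) f.
Proof.
  intros HSX. rewrite (sum_in_split X S). f_equal. apply fsum_ext. intros i _.
  destruct (S i) eqn:E; [rewrite (HSX i E)|rewrite andb_false_r]; auto.
Qed.

Lemma sum_in_remove X f i0 : within p X -> X i0 = true ->
  sum_in p X f = sum_in p (remove X i0) f + f i0.
Proof.
  intros Hs Hi. rewrite (sum_in_split X (fun i => negb (Nat.eqb i i0))). f_equal.
  rewrite (sum_in_single _ _ i0).
  - auto.
  - intros j Hj. apply andb_true_iff in Hj as [Hj _]; apply Hs; auto.
  - rewrite Hi, Nat.eqb_refl; auto.
  - intros j Hj Hne. apply andb_true_iff in Hj as [_ Hj]. rewrite negb_involutive in Hj.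
    apply Nat.eqb_eq in Hj; lia.
Qed.

Lemma sum_in_subset X Y f : (forall i, X i = true -> Y i = true) ->
  sum_in p X f = sum_in p Y (fun i => if X i then f i else 0).
Proof.
  intros H. apply fsum_ext. intros. destruct (X i) eqn:E; [rewrite (H i E); auto|].
  destruct (Y i); auto.
Qed.

End IndexSetSums.

Lemma within_remove p X i0 : within p X -> within p (remove X i0).
Proof. intros Hs i Hi. apply andb_true_iff in Hi as [Hi _]; auto. Qed.

Lemma remove_true X i0 i : remove X i0 i = true <-> X i = true /\ i <> i0.
Proof. unfold remove. rewrite andb_true_iff, negb_true_iff, Nat.eqb_neq. tauto. Qed.

Lemma setminus_true X S i : setminus X S i = true <-> X i = true /\ S i = false.
Proof. unfold setminus. rewrite andb_true_iff, negb_true_iff. tauto. Qed.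

Fixpoint card_in (p : nat) (X : nat -> bool) : nat :=
  match p with O => O | S m => (card_in m X + (if X m then 1 else 0))%nat end.

Lemma card_in_le p X Y : (forall i, X i = true -> Y i = true) -> (card_in p X <= card_in p Y)%nat.
Proof. intros H. induction p; simpl; [lia|]. destruct (X p) eqn:E; [rewrite (H p E)|destruct (Y p)]; lia. Qed.

Lemma card_in_lt p X Y : (forall i, X i = true -> Y i = true) ->
  (exists i, (i < p)%nat /\ Y i = true /\ X i = false) -> (card_in p X < card_in p Y)%nat.
Proof.
  induction p; intros H [i [Hi [HY HX]]]; [lia|]. simpl. pose proof (card_in_le p X Y H).
  destruct (Nat.eq_dec i p).
  - subst. rewrite HY, HX. lia.
  - assert (card_in p X < card_in p Y)%nat by (apply IHp; auto; exists i; repeat split; auto; lia).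
    destruct (X p) eqn:E; [rewrite (H p E)|destruct (Y p)]; lia.
Qed.

Lemma card_in_remove p X i0 : within p X -> X i0 = true ->
  card_in p X = S (card_in p (remove X i0)).
Proof.
  intros Hs Hi. specialize (Hs i0 Hi). induction p as [|m IH]; [lia|]. simpl.
  destruct (Nat.eq_dec i0 m) as [->|Hne].
  - unfold remove at 2. rewrite Nat.eqb_refl, andb_false_r, Hi.
    enough (card_in m (remove X m) = card_in m X) by lia.
    assert (forall q, (q <= m)%nat -> card_in q (remove X m) = card_in q X) by
      (induction q; intros; simpl; auto; rewrite IHq by lia; unfold remove;
       replace (Nat.eqb q m) with false by (symmetry; apply Nat.eqb_neq; lia);
       rewrite andb_true_r; auto).
    auto.
  - rewrite IH by lia.
    replace (remove X i0 m) with (X m); [lia|].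
    unfold remove. replace (Nat.eqb m i0) with false by (symmetry; apply Nat.eqb_neq; lia).
    rewrite andb_true_r; auto.
Qed.

(** * Semi-inner products *)

Record semi_inner := {
  ip :> (nat -> R) -> (nat -> R) -> R;
  ip_sym : forall a b, ip a b = ip b a;
  ip_plus_l : forall a b c, ip (fun k => a k + b k) c = ip a c + ip b c;
  ip_scal_l : forall r a c, ip (fun k => r * a k) c = r * ip a c;
  ip_pos : forall a, 0 <= ip a a }.

Section SemiInner.
Variable g : semi_inner.

Lemma ip_scal_r r a c : g c (fun k => r * a k) = r * g c a.
Proof. rewrite ip_sym, ip_scal_l, (ip_sym g a); auto. Qed.

Lemma ip_zero_l c : g (fun _ => 0) c = 0.
Proof.
  replace (fun _ : nat => 0) with (fun k : nat => 0 * c k)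
    by (apply functional_extensionality; intros; lra).
  rewrite ip_scal_l; lra.
Qed.

Lemma ip_zero_r c : g c (fun _ => 0) = 0.
Proof. rewrite ip_sym; apply ip_zero_l. Qed.

Lemma ip_plus_r a b c : g c (fun k => a k + b k) = g c a + g c b.
Proof. rewrite ip_sym, ip_plus_l, (ip_sym g a), (ip_sym g b); auto. Qed.

Lemma ip_minus_l a b c : g (fun k => a k - b k) c = g a c - g b c.
Proof.
  replace (fun k => a k - b k) with (fun k => a k + (-1) * b k)
    by (apply functional_extensionality; intros; lra).
  rewrite ip_plus_l, ip_scal_l; lra.
Qed.

Lemma ip_minus_r a b c : g c (fun k => a k - b k) = g c a - g c b.
Proof. rewrite ip_sym, ip_minus_l, (ip_sym g a), (ip_sym g b); auto. Qed.

Lemma ip_sum_in_l p X (c : nat -> R) (y : nat -> nat -> R) b :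
  g (fun k => sum_in p X (fun j => c j * y j k)) b = sum_in p X (fun j => c j * g (y j) b).
Proof.
  unfold sum_in. induction p as [|m IH]; simpl; [apply ip_zero_l|].
  rewrite ip_plus_l, IH. f_equal. destruct (X m); [apply ip_scal_l|apply ip_zero_l].
Qed.

Lemma ip_sum_in_r p X (c : nat -> R) (y : nat -> nat -> R) b :
  g b (fun k => sum_in p X (fun j => c j * y j k)) = sum_in p X (fun j => c j * g b (y j)).
Proof. rewrite ip_sym, ip_sum_in_l. apply sum_in_ext; intros; rewrite ip_sym; auto. Qed.

Lemma ip_sqnorm_minus a b :
  g (fun k => a k - b k) (fun k => a k - b k) = g a a - 2 * g a b + g b b.
Proof. rewrite ip_minus_l, !ip_minus_r, (ip_sym g b a). lra. Qed.

Lemma ip_sqnorm_plus a b :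
  g (fun k => a k + b k) (fun k => a k + b k) = g a a + 2 * g a b + g b b.
Proof. rewrite ip_plus_l, !ip_plus_r, (ip_sym g b a). lra. Qed.

Lemma ip_sqnorm_minus_sym a b :
  g (fun k => a k - b k) (fun k => a k - b k) = g (fun k => b k - a k) (fun k => b k - a k).
Proof. rewrite !ip_sqnorm_minus, (ip_sym g a b). lra. Qed.

Lemma ip_le_half_sum a b : 2 * g a b <= g a a + g b b.
Proof. pose proof (ip_pos g (fun k => a k - b k)). rewrite ip_sqnorm_minus in H. lra. Qed.

Lemma ip_abs_le_half_sum a b : 2 * Rabs (g a b) <= g a a + g b b.
Proof.
  pose proof (ip_le_half_sum a b). pose proof (ip_pos g (fun k => a k + b k)).
  rewrite ip_sqnorm_plus in H0. unfold Rabs; destruct Rcase_abs; lra.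
Qed.

Lemma ip_abs_le_young a b t : 0 < t -> 2 * Rabs (g a b) <= t * g a a + / t * g b b.
Proof.
  intros Ht. pose proof (ip_abs_le_half_sum (fun k => t * a k) b) as H.
  rewrite ip_scal_l, ip_scal_l, ip_scal_r, Rabs_mult, (Rabs_right t) in H by lra.
  apply (Rmult_le_reg_l t); [lra|].
  replace (t * (t * g a a + / t * g b b)) with (t * t * g a a + g b b) by (field; lra). lra.
Qed.

Lemma ip_sqnorm_plus_le a b :
  g (fun k => a k + b k) (fun k => a k + b k) <= 2 * g a a + 2 * g b b.
Proof. rewrite ip_sqnorm_plus. pose proof (ip_le_half_sum a b). lra. Qed.

Lemma ip_sqnorm_minus_le a b :
  g (fun k => a k - b k) (fun k => a k - b k) <= 2 * g a a + 2 * g b b.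
Proof. rewrite ip_sqnorm_minus. pose proof (ip_abs_le_half_sum a b). pose proof (Rle_abs (- g a b)).
  rewrite Rabs_Ropp in H0. lra. Qed.

Lemma ip_sqnorm_sum_le p X (al : nat -> R) (u : nat -> nat -> R) :
  (forall j, X j = true -> 0 <= al j) ->
  g (fun k => sum_in p X (fun j => al j * u j k)) (fun k => sum_in p X (fun j => al j * u j k))
  <= sum_in p X al * sum_in p X (fun j => al j * g (u j) (u j)).
Proof.
  intros Hal. rewrite ip_sum_in_l.
  rewrite (sum_in_ext p X _ (fun j => al j * sum_in p X (fun j' => al j' * g (u j) (u j'))))
    by (intros; rewrite ip_sum_in_r; auto).
  set (d := fun j => g (u j) (u j)).
  apply (Rmult_le_reg_l 2); [lra|].
  apply Rle_trans with
    (sum_in p X (fun j => sum_in p X (fun j' => al j * al j' * (d j + d j')))).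
  - rewrite <- sum_in_scal_l. apply sum_in_le; intros j Hj.
    rewrite <- sum_in_scal_l, <- sum_in_scal_l. apply sum_in_le; intros j' Hj'.
    replace (2 * (al j * (al j' * g (u j) (u j'))))
      with (al j * al j' * (2 * g (u j) (u j'))) by ring.
    apply Rmult_le_compat_l; [apply Rmult_le_pos; auto|]. apply ip_le_half_sum.
  - right.
    rewrite (sum_in_ext p X _ (fun j => sum_in p X (fun j' => al j' * (al j * d j))
                                       + sum_in p X (fun j' => al j * (al j' * d j')))).
    2:{ intros j _. rewrite <- sum_in_plus. apply sum_in_ext; intros; ring. }
    rewrite sum_in_plus, (sum_in_comm p X X (fun j j' => al j * (al j' * d j'))).
    cbv beta.
    rewrite (sum_in_ext p X (fun j => sum_in p X (fun j' => al j' * (al j * d j)))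
                            (fun j => sum_in p X al * (al j * d j)))
      by (intros; apply sum_in_scal_r).
    rewrite sum_in_scal_l. unfold d. ring.
Qed.

End SemiInner.

(** * Lyapunov certificates *)

Definition sqnorm (g : semi_inner) p X (y : nat -> nat -> R) : R :=
  sum_in p X (fun i => g (y i) (y i)).

Definition qform (g : semi_inner) p X (P : nat -> nat -> R) (a b : nat -> nat -> R) : R :=
  sum_in p X (fun i => sum_in p X (fun j => P i j * g (a i) (b j))).

Definition mx_apply p X (B : nat -> nat -> R) (y : nat -> nat -> R) : nat -> nat -> R :=
  fun i k => sum_in p X (fun j => B i j * y j k).

Definition subgenerator p X (B : nat -> nat -> R) : Prop :=
  (forall i j, X i = true -> X j = true -> i <> j -> 0 <= B i j) /\
  (forall i, X i = true -> sum_in p X (B i) <= 0).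

Definition lyapunov_certificate p X B (P : nat -> nat -> R) (lam Lam eps : R) : Prop :=
  0 < lam /\ 0 < Lam /\ 0 < eps /\ (forall i j, P i j = P j i) /\
  forall (g : semi_inner) y,
    lam * sqnorm g p X y <= qform g p X P y y /\
    qform g p X P y y <= Lam * sqnorm g p X y /\
    qform g p X P y (mx_apply p X B y) <= - eps * sqnorm g p X (mx_apply p X B y).

Definition has_lyapunov p X B : Prop :=
  exists P lam Lam eps, lyapunov_certificate p X B P lam Lam eps.

Lemma sqnorm_nonneg g p X y : 0 <= sqnorm g p X y.
Proof. apply sum_in_nonneg; intros; apply ip_pos. Qed.

Lemma sqnorm_ext g p X a a' : (forall i, X i = true -> a i = a' i) ->
  sqnorm g p X a = sqnorm g p X a'.
Proof. intros Ha. apply sum_in_ext; intros i Hi. rewrite Ha; auto. Qed.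

Lemma sqnorm_ge_term (g : semi_inner) p X y i : within p X -> X i = true -> g (y i) (y i) <= sqnorm g p X y.
Proof. intros Hs Hi. apply (sum_in_ge_term p X (fun i => g (y i) (y i))); auto. intros; apply ip_pos. Qed.

Lemma qform_ext g p X P a a' b b' : (forall i, X i = true -> a i = a' i) ->
  (forall i, X i = true -> b i = b' i) -> qform g p X P a b = qform g p X P a' b'.
Proof.
  intros Ha Hb. apply sum_in_ext; intros i Hi. apply sum_in_ext; intros j Hj. rewrite Ha, Hb; auto.
Qed.

Lemma qform_minus_r g p X P a b c :
  qform g p X P a (fun i k => b i k - c i k) = qform g p X P a b - qform g p X P a c.
Proof.
  unfold qform. rewrite <- sum_in_minus. apply sum_in_ext; intros. rewrite <- sum_in_minus.
  apply sum_in_ext; intros. rewrite ip_minus_r. ring.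
Qed.

Lemma qform_plus_l g p X P a a' b :
  qform g p X P (fun i k => a i k + a' i k) b = qform g p X P a b + qform g p X P a' b.
Proof.
  unfold qform. rewrite <- sum_in_plus. apply sum_in_ext; intros. rewrite <- sum_in_plus.
  apply sum_in_ext; intros. rewrite ip_plus_l. ring.
Qed.

Lemma qform_plus_r g p X P a b b' :
  qform g p X P a (fun i k => b i k + b' i k) = qform g p X P a b + qform g p X P a b'.
Proof.
  unfold qform. rewrite <- sum_in_plus. apply sum_in_ext; intros. rewrite <- sum_in_plus.
  apply sum_in_ext; intros. rewrite ip_plus_r. ring.
Qed.

Lemma qform_scal_r g p X P a r b :
  qform g p X P a (fun i k => r * b i k) = r * qform g p X P a b.
Proof.
  unfold qform. rewrite <- sum_in_scal_l. apply sum_in_ext; intros. rewrite <- sum_in_scal_l.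
  apply sum_in_ext; intros. rewrite ip_scal_r. ring.
Qed.

Lemma qform_scal_l g p X P a r b :
  qform g p X P (fun i k => r * a i k) b = r * qform g p X P a b.
Proof.
  unfold qform. rewrite <- sum_in_scal_l. apply sum_in_ext; intros. rewrite <- sum_in_scal_l.
  apply sum_in_ext; intros. rewrite ip_scal_l. ring.
Qed.

Lemma qform_sym g p X P a b : (forall i j, P i j = P j i) -> qform g p X P a b = qform g p X P b a.
Proof.
  intros HP. unfold qform. rewrite sum_in_comm. apply sum_in_ext; intros; apply sum_in_ext; intros.
  rewrite HP, ip_sym. auto.
Qed.

Lemma qform_diff_sq g p X P a b : (forall i j, P i j = P j i) ->
  qform g p X P a a - qform g p X P b b =
  qform g p X P (fun i k => a i k - b i k) (fun i k => a i k + b i k).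
Proof.
  intros HP.
  replace (fun i k => a i k - b i k) with (fun i k => a i k + (-1) * b i k)
    by (do 2 (apply functional_extensionality; intros); ring).
  rewrite qform_plus_l, !qform_plus_r.
  rewrite !qform_scal_l, (qform_sym g p X P b a HP). ring.
Qed.

Lemma subgenerator_diag p X B i : subgenerator p X B -> within p X -> X i = true -> B i i <= 0.
Proof.
  intros [Hoff Hrow] Hs Hi. pose proof (Hrow i Hi) as Hr.
  rewrite (sum_in_remove p X _ i Hs Hi) in Hr.
  assert (0 <= sum_in p (remove X i) (B i)); [|lra].
  apply sum_in_nonneg. intros j Hj. apply remove_true in Hj as [Hj Hne]. apply Hoff; auto.
Qed.

Lemma weighted_dissipation_identity (g : semi_inner) p X B w y :
  2 * sum_in p X (fun i => w i * g (y i) (mx_apply p X B y i)) =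
  - (sum_in p X (fun i => sum_in p X (fun j =>
        w i * B i j * g (fun k => y i k - y j k) (fun k => y i k - y j k)))
     + sum_in p X (fun i => (- (w i * sum_in p X (B i)) - sum_in p X (fun i' => w i' * B i' i))
                            * g (y i) (y i))).
Proof.
  set (G := fun i j => g (y i) (y j)).
  assert (Hnd : forall i j, g (fun k => y i k - y j k) (fun k => y i k - y j k) = G i i - 2 * G i j + G j j)
    by (intros; apply ip_sqnorm_minus).
  rewrite (sum_in_ext p X (fun i => w i * g (y i) (mx_apply p X B y i))
             (fun i => sum_in p X (fun j => w i * B i j * G i j)))
    by (intros; unfold mx_apply; rewrite ip_sum_in_r, <- sum_in_scal_l;
        apply sum_in_ext; intros; unfold G; ring).
  rewrite (sum_in_ext p X (fun i => sum_in p X (fun j =>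
             w i * B i j * g (fun k => y i k - y j k) (fun k => y i k - y j k)))
             (fun i => sum_in p X (fun j => w i * B i j * G i i) - 2 * sum_in p X (fun j => w i * B i j * G i j)
                       + sum_in p X (fun j => w i * B i j * G j j))).
  2:{ intros i _. rewrite <- sum_in_scal_l, <- sum_in_minus, <- sum_in_plus.
      apply sum_in_ext; intros j _. rewrite Hnd. ring. }
  rewrite !sum_in_plus, !sum_in_minus, <- !sum_in_scal_l.
  rewrite (sum_in_comm p X X (fun i j => w i * B i j * G j j)).
  rewrite (sum_in_ext p X (fun i => sum_in p X (fun j => w i * B i j * G i i))
             (fun i => w i * sum_in p X (B i) * G i i))
    by (intros; rewrite <- sum_in_scal_l, <- sum_in_scal_r; apply sum_in_ext; intros; ring).
  rewrite (sum_in_ext p X (fun j => sum_in p X (fun i => w i * B i j * G j j))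
             (fun j => sum_in p X (fun i => w i * B i j) * G j j))
    by (intros; rewrite <- sum_in_scal_r; auto).
  rewrite (sum_in_ext p X (fun i => (- (w i * sum_in p X (B i)) - sum_in p X (fun i' => w i' * B i' i)) * g (y i) (y i))
             (fun i => - (w i * sum_in p X (B i) * G i i) - sum_in p X (fun i' => w i' * B i' i) * G i i))
    by (intros; unfold G; ring).
  rewrite sum_in_minus, sum_in_opp. ring.
Qed.

Section DiagonalCertificate.
Variables (p : nat) (X : nat -> bool) (B : nat -> nat -> R) (w : nat -> R).
Hypotheses (HX : within p X) (HB : subgenerator p X B)
  (Hw : forall i, X i = true -> 0 < w i)
  (Hwc : forall j, X j = true -> sum_in p X (fun i => w i * B i j) <= 0).

Let dist2 (g : semi_inner) (y : nat -> nat -> R) i j := g (fun k => y i k - y j k) (fun k => y i k - y j k).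
Let r i := sum_in p X (B i).
Let c j := sum_in p X (fun i => w i * B i j).

Let off i j := if Nat.eqb i j then 0 else B i j.

Lemma off_nonneg i j : X i = true -> X j = true -> 0 <= off i j.
Proof.
  intros Hi Hj. unfold off. destruct (Nat.eqb i j) eqn:E; [lra|].
  apply (proj1 HB); auto. apply Nat.eqb_neq; auto.
Qed.

Lemma sum_in_off i : X i = true -> sum_in p X (off i) = r i - B i i.
Proof.
  intros Hi. unfold r. rewrite (sum_in_remove p X (B i) i HX Hi), (sum_in_remove p X (off i) i HX Hi).
  unfold off at 2. rewrite Nat.eqb_refl.
  enough (sum_in p (remove X i) (off i) = sum_in p (remove X i) (B i)) by lra.
  apply sum_in_ext. intros j Hj. apply remove_true in Hj as [_ Hj].
  unfold off. apply not_eq_sym, Nat.eqb_neq in Hj. rewrite Hj; auto.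
Qed.

Lemma mx_apply_off y i : X i = true ->
  mx_apply p X B y i = fun k => sum_in p X (fun j => off i j * (y j k - y i k)) + r i * y i k.
Proof.
  intros Hi. apply functional_extensionality; intros k. unfold mx_apply.
  rewrite (sum_in_ext p X (fun j => off i j * (y j k - y i k))
             (fun j => B i j * y j k - off i j * y i k - (B i j - off i j) * y j k)).
  2:{ intros j _. unfold off. destruct (Nat.eqb i j) eqn:E; [apply Nat.eqb_eq in E; subst|]; ring. }
  rewrite !sum_in_minus, sum_in_scal_r, (sum_in_off i Hi).
  rewrite (sum_in_single p X (fun j => (B i j - off i j) * y j k) i HX Hi).
  - unfold off. rewrite Nat.eqb_refl. ring.
  - intros j _ Hne. unfold off. apply not_eq_sym, Nat.eqb_neq in Hne. rewrite Hne. ring.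
Qed.

Lemma row_sqnorm_le (g : semi_inner) y lam K i :
  X i = true -> 0 < lam -> lam <= w i -> - B i i <= K ->
  lam * g (mx_apply p X B y i) (mx_apply p X B y i) <=
  2 * K * (sum_in p X (fun j => w i * B i j * dist2 g y i j) + (- (w i * r i) - c i) * g (y i) (y i)).
Proof.
  intros Hi Hlam Hlw HK. pose proof (proj1 HB) as Hoff.
  set (al := off i). assert (Hal : forall j, X j = true -> 0 <= al j) by (intros; apply off_nonneg; auto).
  assert (Hsal : sum_in p X al = r i - B i i) by (apply sum_in_off; auto).
  assert (Hri : r i <= 0) by (apply (proj2 HB); auto).
  assert (Hsal0 : 0 <= sum_in p X al) by (apply sum_in_nonneg; auto).
  set (u := fun k => sum_in p X (fun j => al j * (y j k - y i k))).
  rewrite (mx_apply_off y i Hi). fold al u.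
  assert (Hu : g u u <= K * sum_in p X (fun j => al j * dist2 g y i j)).
  { eapply Rle_trans; [apply (ip_sqnorm_sum_le g p X al (fun j k => y j k - y i k) Hal)|].
    rewrite (sum_in_ext p X (fun j => al j * g (fun k => y j k - y i k) (fun k => y j k - y i k))
               (fun j => al j * dist2 g y i j)) by (intros; unfold dist2; rewrite ip_sqnorm_minus_sym; auto).
    apply Rmult_le_compat_r; [apply sum_in_nonneg; intros; apply Rmult_le_pos; auto; apply ip_pos|lra]. }
  assert (Hgi : 0 <= g (y i) (y i)) by apply ip_pos.
  assert (T1 : lam * sum_in p X (fun j => al j * dist2 g y i j) <=
               sum_in p X (fun j => w i * B i j * dist2 g y i j)).
  { rewrite <- sum_in_scal_l. apply sum_in_le; intros j Hj. unfold al, off.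
    assert (0 <= dist2 g y i j) by apply ip_pos.
    destruct (Nat.eqb i j) eqn:E.
    - apply Nat.eqb_eq in E; subst. unfold dist2.
      replace (fun k => y j k - y j k) with (fun _ : nat => 0)
        by (apply functional_extensionality; intros; ring).
      rewrite ip_zero_l. lra.
    - assert (0 <= B i j) by (apply Hoff; auto; apply Nat.eqb_neq; auto).
      assert (0 <= B i j * dist2 g y i j) by (apply Rmult_le_pos; auto). nra. }
  assert (T2 : lam * (- r i) * g (y i) (y i) <= (- (w i * r i) - c i) * g (y i) (y i)).
  { apply Rmult_le_compat_r; auto. pose proof (Hwc i Hi). fold (c i) in H. nra. }
  eapply Rle_trans; [apply Rmult_le_compat_l; [lra|apply ip_sqnorm_plus_le]|].
  rewrite ip_scal_l, ip_scal_r. fold u.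
  assert (r i * (r i * g (y i) (y i)) <= K * (- r i) * g (y i) (y i)).
  { replace (r i * (r i * g (y i) (y i))) with ((- r i) * (- r i) * g (y i) (y i)) by ring.
    apply Rmult_le_compat_r; auto. apply Rmult_le_compat_r; lra. }
  nra.
Qed.

Lemma weighted_dissipation (g : semi_inner) y lam K :
  0 < lam -> (forall i, X i = true -> lam <= w i) ->
  0 < K -> (forall i, X i = true -> - B i i <= K) ->
  sum_in p X (fun i => w i * g (y i) (mx_apply p X B y i))
  <= - (lam / (4 * K)) * sqnorm g p X (mx_apply p X B y).
Proof.
  intros Hlam Hlw HK HKi.
  set (D := sum_in p X (fun i => sum_in p X (fun j => w i * B i j * dist2 g y i j))
            + sum_in p X (fun i => (- (w i * r i) - c i) * g (y i) (y i))).
  assert (HF : 2 * sum_in p X (fun i => w i * g (y i) (mx_apply p X B y i)) = - D)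
    by apply weighted_dissipation_identity.
  assert (HD : lam * sqnorm g p X (mx_apply p X B y) <= 2 * K * D).
  { unfold sqnorm, D. rewrite <- sum_in_scal_l, <- sum_in_plus, <- sum_in_scal_l.
    apply sum_in_le; intros i Hi. apply row_sqnorm_le; auto. }
  apply (Rmult_le_reg_l (4 * K)); [lra|].
  replace (4 * K * (- (lam / (4 * K)) * sqnorm g p X (mx_apply p X B y)))
    with (- (lam * sqnorm g p X (mx_apply p X B y))) by (field; lra).
  set (S := sum_in p X (fun i => w i * g (y i) (mx_apply p X B y i))) in *.
  replace (4 * K * S) with (2 * K * (2 * S)) by ring. rewrite HF. lra.
Qed.

Lemma diagonal_lyapunov : has_lyapunov p X B.
Proof.
  set (lam := / (1 + sum_in p X (fun i => / w i))).
  assert (Hinv : forall i, X i = true -> 0 <= / w i) by (intros; left; apply Rinv_0_lt_compat; auto).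
  assert (Hlam : 0 < lam) by (apply Rinv_0_lt_compat; pose proof (sum_in_nonneg p X _ Hinv); lra).
  assert (Hlamw : forall i, X i = true -> lam <= w i).
  { intros i Hi. pose proof (Hw i Hi).
    pose proof (sum_in_ge_term p X (fun i => / w i) i HX Hinv Hi).
    replace (w i) with (/ / w i) by (field; lra).
    apply Rinv_le_contravar; [apply Rinv_0_lt_compat; auto|lra]. }
  set (K := 1 + sum_in p X (fun i => - B i i)).
  assert (HBii : forall i, X i = true -> 0 <= - B i i)
    by (intros i Hi; pose proof (subgenerator_diag p X B i HB HX Hi); lra).
  assert (HK : 0 < K) by (pose proof (sum_in_nonneg p X _ HBii); unfold K; lra).
  assert (HKi : forall i, X i = true -> - B i i <= K)
    by (intros i Hi; pose proof (sum_in_ge_term p X (fun i => - B i i) i HX HBii Hi); unfold K; lra).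
  assert (Hsw : forall i, X i = true -> w i <= sum_in p X w)
    by (intros i Hi; apply sum_in_ge_term; auto; intros; left; auto).
  assert (Hdiag : forall (g : semi_inner) a b,
    qform g p X (fun i j => if Nat.eqb i j then w i else 0) a b = sum_in p X (fun i => w i * g (a i) (b i))).
  { intros g a b. apply sum_in_ext; intros i Hi. rewrite (sum_in_single p X _ i HX Hi).
    - rewrite Nat.eqb_refl; auto.
    - intros j _ Hne. apply not_eq_sym, Nat.eqb_neq in Hne. rewrite Hne. lra. }
  exists (fun i j => if Nat.eqb i j then w i else 0), lam, (1 + sum_in p X w), (lam / (4 * K)).
  split; [auto|]. split; [pose proof (sum_in_nonneg p X w (fun i Hi => Rlt_le _ _ (Hw i Hi))); lra|].
  split; [apply Rdiv_lt_0_compat; lra|].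
  split.
  { intros i j. rewrite Nat.eqb_sym. destruct (Nat.eqb j i) eqn:E; auto.
    apply Nat.eqb_eq in E; subst; auto. }
  intros g y. rewrite !Hdiag. unfold sqnorm.
  split; [|split].
  - rewrite <- sum_in_scal_l. apply sum_in_le; intros i Hi.
    apply Rmult_le_compat_r; [apply ip_pos|auto].
  - rewrite <- sum_in_scal_l. apply sum_in_le; intros i Hi.
    apply Rmult_le_compat_r; [apply ip_pos|]. pose proof (Hsw i Hi). lra.
  - apply weighted_dissipation; auto.
Qed.

End DiagonalCertificate.

(** * Stationary vectors and irreducible classes *)

Definition generator p X (B : nat -> nat -> R) : Prop :=
  (forall i j, X i = true -> X j = true -> i <> j -> 0 <= B i j) /\
  (forall i, X i = true -> sum_in p X (B i) = 0).

(* The Schur complement eliminating the state [i0]. *)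
Lemma generator_eliminate p X B i0 : within p X -> generator p X B -> X i0 = true -> B i0 i0 < 0 ->
  generator p (remove X i0) (fun i j => B i j + B i i0 * B i0 j / (- B i0 i0)).
Proof.
  intros Hs [Hoff Hrow] Hi0 Hd. split.
  - intros i j Hi Hj Hne. apply remove_true in Hi as [Hi Hi']. apply remove_true in Hj as [Hj Hj'].
    assert (0 <= B i j) by (apply Hoff; auto). assert (0 <= B i i0) by (apply Hoff; auto).
    assert (0 <= B i0 j) by (apply Hoff; auto).
    assert (0 <= B i i0 * B i0 j / (- B i0 i0))
      by (apply Rmult_le_pos; [apply Rmult_le_pos|left; apply Rinv_0_lt_compat; lra]; auto).
    lra.
  - intros i Hi. apply remove_true in Hi as [Hi Hi']. rewrite sum_in_plus.
    rewrite (sum_in_ext p _ (fun j => B i i0 * B i0 j / - B i0 i0) (fun j => B i0 j * (B i i0 / - B i0 i0)))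
      by (intros; field; lra).
    rewrite sum_in_scal_r.
    pose proof (Hrow i Hi) as Hri. pose proof (Hrow i0 Hi0) as Hr0.
    rewrite (sum_in_remove p X _ i0 Hs Hi0) in Hri. rewrite (sum_in_remove p X _ i0 Hs Hi0) in Hr0.
    replace (sum_in p (remove X i0) (B i0)) with (- B i0 i0) by lra.
    field_simplify; lra.
Qed.

Lemma generator_subgenerator p X B : generator p X B -> subgenerator p X B.
Proof. intros [Hoff Hrow]. split; auto. intros i Hi. rewrite Hrow; auto; lra. Qed.

Definition stationary p X (B : nat -> nat -> R) (w : nat -> R) : Prop :=
  (forall i, X i = true -> 0 <= w i) /\ (exists i, X i = true /\ 0 < w i) /\
  forall j, X j = true -> sum_in p X (fun i => w i * B i j) = 0.

Lemma absorbing_stationary p X B i0 : within p X -> generator p X B -> X i0 = true ->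
  B i0 i0 = 0 -> stationary p X B (fun i => if Nat.eqb i i0 then 1 else 0).
Proof.
  intros Hs [Hoff Hrow] Hi0 Hz. split; [|split].
  - intros. destruct (Nat.eqb i i0); lra.
  - exists i0. rewrite Nat.eqb_refl; split; auto; lra.
  - intros j Hj. rewrite (sum_in_single p X _ i0 Hs Hi0).
    + rewrite Nat.eqb_refl, Rmult_1_l. destruct (Nat.eq_dec j i0) as [->|Hne]; [auto|].
      pose proof (Hrow i0 Hi0) as Hr. rewrite (sum_in_remove p X _ i0 Hs Hi0), Hz, Rplus_0_r in Hr.
      apply (sum_in_nonneg_eq0 p (remove X i0) (B i0) (within_remove p X i0 Hs)); auto.
      * intros k Hk. apply remove_true in Hk as [Hk Hne']. apply Hoff; auto.
      * apply remove_true; auto.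
    + intros i _ Hne. apply Nat.eqb_neq in Hne. rewrite Hne. lra.
Qed.

Lemma stationary_lift p X B i0 w' : within p X -> generator p X B -> X i0 = true ->
  B i0 i0 < 0 -> stationary p (remove X i0) (fun i j => B i j + B i i0 * B i0 j / (- B i0 i0)) w' ->
  stationary p X B
    (fun i => if Nat.eqb i i0 then sum_in p (remove X i0) (fun i => w' i * B i i0) / (- B i0 i0) else w' i).
Proof.
  intros Hs [Hoff Hrow] Hi0 Hd [Hw'0 [[i1 [Hi1 Hw'1]] Hw'e]].
  set (d := - B i0 i0). set (X' := remove X i0). set (wp := sum_in p X' (fun i => w' i * B i i0) / d).
  split; [|split].
  - intros i Hi. destruct (Nat.eqb i i0) eqn:E.
    + apply Rmult_le_pos; [|left; apply Rinv_0_lt_compat; unfold d; lra]. apply sum_in_nonneg. intros k Hk.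
      pose proof Hk as [Hk' Hne]%remove_true. apply Rmult_le_pos; [apply Hw'0; auto|apply Hoff; auto].
    + apply Hw'0. apply remove_true. split; auto. apply Nat.eqb_neq; auto.
  - exists i1. pose proof Hi1 as [Hi1' Hne]%remove_true. split; auto.
    apply Nat.eqb_neq in Hne. rewrite Hne; auto.
  - intros j Hj. rewrite (sum_in_remove p X _ i0 Hs Hi0), Nat.eqb_refl. fold X' d wp.
    rewrite (sum_in_ext p X' _ (fun i => w' i * B i j)).
    2:{ intros i Hi. apply remove_true in Hi as [_ Hne]. apply Nat.eqb_neq in Hne. rewrite Hne; auto. }
    destruct (Nat.eq_dec j i0) as [->|Hne].
    + unfold wp. replace (B i0 i0) with (- d) by (unfold d; lra). field. unfold d; lra.
    + pose proof (Hw'e j ltac:(apply remove_true; auto)) as E. fold d X' in E.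
      rewrite (sum_in_ext p X' _ (fun i => w' i * B i j + w' i * B i i0 * (B i0 j / d))) in E
        by (intros; unfold Rdiv; ring).
      rewrite sum_in_plus, sum_in_scal_r in E. unfold wp. lra.
Qed.

Lemma generator_stationary : forall N p X B, (card_in p X < N)%nat -> within p X -> generator p X B ->
  (exists i, X i = true) -> exists w, stationary p X B w.
Proof.
  induction N; intros p X B HN Hs Hgen [i0 Hi0]; [lia|].
  destruct (Req_dec (B i0 i0) 0) as [Hz|Hnz]; [eexists; apply (absorbing_stationary p X B i0); auto|].
  assert (Hd : B i0 i0 < 0)
    by (pose proof (subgenerator_diag p X B i0 (generator_subgenerator p X B Hgen) Hs Hi0); lra).
  destruct (IHN p (remove X i0) (fun i j => B i j + B i i0 * B i0 j / (- B i0 i0))) as [w' Hw'].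
  { pose proof (card_in_remove p X i0 Hs Hi0). lia. }
  { apply within_remove; auto. }
  { apply generator_eliminate; auto. }
  { (* a row of [B] with nothing off its diagonal would have a zero diagonal *)
    apply NNPP. intros Hempty. pose proof (proj2 Hgen i0 Hi0) as Hr.
    rewrite (sum_in_remove p X _ i0 Hs Hi0), (sum_in_empty p (remove X i0)) in Hr; [lra|].
    intros i. destruct (remove X i0 i) eqn:E; auto. exfalso; apply Hempty; eauto. }
  eexists. apply stationary_lift; eauto.
Qed.

Definition no_edge_into X (B : nat -> nat -> R) (T : nat -> bool) : Prop :=
  forall i j, X i = true -> T j = true -> T i = false -> B i j = 0.

Definition irreducible S (B : nat -> nat -> R) : Prop :=
  forall T, (forall i, T i = true -> S i = true) -> (exists j, T j = true) -> no_edge_into S B T ->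
    forall i, S i = true -> T i = true.

Lemma exists_irreducible_class : forall N p X B, (card_in p X < N)%nat -> within p X ->
  (exists i, X i = true) ->
  exists S, (forall i, S i = true -> X i = true) /\ (exists i, S i = true) /\
    no_edge_into X B S /\ irreducible S B.
Proof.
  induction N; intros p X B HN Hs Hne; [lia|].
  destruct (classic (irreducible X B)) as [Hi|Hi].
  - exists X. split; [auto|]. split; [auto|]. split; [|auto].
    intros i j HXi _ HXi'. congruence.
  - apply not_all_ex_not in Hi as [T Hi].
    apply imply_to_and in Hi as [HTX Hi]. apply imply_to_and in Hi as [HTne Hi].
    apply imply_to_and in Hi as [HTcl Hi].
    apply not_all_ex_not in Hi as [i0 Hi]. apply imply_to_and in Hi as [Hi0 HTi0].
    assert (Hc : (card_in p T < card_in p X)%nat).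
    { apply card_in_lt; auto. exists i0. repeat split; auto. destruct (T i0); auto; congruence. }
    destruct (IHN p T B ltac:(lia) ltac:(intros i Hi; apply Hs; auto) HTne)
      as [S [HST [HSne [HScl HSirr]]]].
    exists S. repeat split; auto.
    intros i j HXi HSj HSi. destruct (T i) eqn:ETi.
    + apply (HScl i j ETi HSj HSi).
    + apply (HTcl i j HXi (HST j HSj) ETi).
Qed.

Lemma irreducible_zero_set S B (v : nat -> R) : irreducible S B ->
  (exists j, S j = true /\ v j = 0) ->
  (forall i j, S i = true -> S j = true -> v j = 0 -> v i <> 0 -> B i j = 0) ->
  forall j, S j = true -> v j = 0.
Proof.
  intros Hirr [j0 [Hj0 Hv0]] Hedge.
  set (T := fun j => S j && (if Req_EM_T (v j) 0 then true else false)).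
  assert (HT : forall j, T j = true <-> S j = true /\ v j = 0).
  { intros j. unfold T. rewrite andb_true_iff. destruct (Req_EM_T (v j) 0); intuition discriminate. }
  intros j Hj. apply HT, (Hirr T); auto.
  - intros i Hi. apply HT in Hi. tauto.
  - exists j0. apply HT; auto.
  - intros i k Hi Hk HTi. apply HT in Hk as [Hk Hvk]. apply Hedge; auto.
    intros E. assert (T i = true) by (apply HT; auto). congruence.
Qed.

Lemma irreducible_positive_weights p X B : within p X -> subgenerator p X B -> irreducible X B ->
  (exists i, X i = true) ->
  exists w, (forall i, X i = true -> 0 < w i) /\
    forall j, X j = true -> sum_in p X (fun i => w i * B i j) <= 0.
Proof.
  intros Hs [Hoff Hrow] Hirr [i0 Hi0].
  set (c := sum_in p X (fun _ => 1)).
  assert (Hc : 0 < c) by (pose proof (sum_in_ge_term p X (fun _ => 1) i0 Hs ltac:(intros; lra) Hi0); unfold c; lra).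
  set (r := fun i => sum_in p X (B i)).
  assert (Hr : forall i, X i = true -> r i / c <= 0)
    by (intros i Hi; apply Rmult_le_0_r; [apply Hrow; auto|left; apply Rinv_0_lt_compat; auto]).
  (* spreading each row deficit uniformly over the row gives a generator *)
  set (Bt := fun i j => B i j - r i / c).
  assert (Hg : generator p X Bt).
  { split.
    - intros i j Hi Hj Hne. unfold Bt. pose proof (Hoff i j Hi Hj Hne). pose proof (Hr i Hi). lra.
    - intros i Hi. unfold Bt. rewrite sum_in_minus.
      rewrite (sum_in_ext p X (fun _ => r i / c) (fun _ => 1 * (r i / c))) by (intros; ring).
      rewrite sum_in_scal_r. fold c. fold (r i). field; lra. }
  destruct (generator_stationary (S (card_in p X)) p X Bt ltac:(lia) Hs Hg ltac:(eauto))
    as [w [Hw0 [[i1 [Hi1 Hw1]] Hwe]]].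
  assert (Hpos : forall i, X i = true -> 0 < w i).
  { intros i Hi. destruct (Req_dec (w i) 0) as [E|E]; [exfalso|pose proof (Hw0 i Hi); lra].
    enough (w i1 = 0) by lra.
    apply (irreducible_zero_set X B w Hirr); eauto.
    intros k j Hk Hj Hwj Hwk. assert (Hkj : k <> j) by (intros ->; lra).
    assert (Hnn : forall m, X m = true -> 0 <= w m * Bt m j).
    { intros m Hm. destruct (Nat.eq_dec m j) as [->|]; [rewrite Hwj; lra|].
      apply Rmult_le_pos; auto. apply Hg; auto. }
    pose proof (sum_in_nonneg_eq0 p X _ Hs Hnn (Hwe j Hj) k Hk) as Hz.
    apply Rmult_integral in Hz as [Hz|Hz]; [lra|].
    unfold Bt in Hz. pose proof (Hoff k j Hk Hj Hkj). pose proof (Hr k Hk). lra. }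
  exists w. split; auto.
  intros j Hj. pose proof (Hwe j Hj) as E. unfold Bt in E.
  rewrite (sum_in_ext p X _ (fun i => w i * B i j - w i * (r i / c))) in E by (intros; ring).
  rewrite sum_in_minus in E.
  assert (sum_in p X (fun i => w i * (r i / c)) <= 0); [|lra].
  rewrite <- (sum_in_zero p X). apply sum_in_le. intros i Hi.
  pose proof (Hw0 i Hi). pose proof (Hr i Hi). nra.
Qed.

Definition injective_on p Rw C (M : nat -> nat -> R) : Prop :=
  forall z, (forall i, Rw i = true -> sum_in p C (fun j => M i j * z j) = 0) ->
  forall j, C j = true -> z j = 0.

Section PivotElimination.
Variables (p : nat) (Rw C : nat -> bool) (M : nat -> nat -> R) (r p0 : nat).
Hypotheses (HsC : within p C) (Hp0 : C p0 = true) (Hr : Rw r = true) (HMr : M r p0 <> 0).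

Let M' i j := M i j - M i p0 * M r j / M r p0.
Let extend (z' : nat -> R) (v : R) j := if Nat.eqb j p0 then v else z' j.

Lemma sum_in_extend z' v i : sum_in p C (fun j => M i j * extend z' v j)
  = sum_in p (remove C p0) (fun j => M i j * z' j) + M i p0 * v.
Proof.
  rewrite (sum_in_remove p C _ p0 HsC Hp0). unfold extend. rewrite Nat.eqb_refl.
  f_equal. apply sum_in_ext. intros j Hj. apply remove_true in Hj as [_ Hj].
  apply Nat.eqb_neq in Hj. rewrite Hj; auto.
Qed.

Lemma sum_in_pivoted z' i : sum_in p (remove C p0) (fun j => M' i j * z' j)
  = sum_in p (remove C p0) (fun j => M i j * z' j)
    - M i p0 / M r p0 * sum_in p (remove C p0) (fun j => M r j * z' j).
Proof.
  unfold M'. rewrite <- sum_in_scal_l, <- sum_in_minus. apply sum_in_ext; intros; field; auto.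
Qed.

Lemma pivot_injective : injective_on p Rw C M -> injective_on p (remove Rw r) (remove C p0) M'.
Proof.
  intros Hinj z' Hz j Hj.
  set (v := - sum_in p (remove C p0) (fun j => M r j * z' j) / M r p0).
  assert (Hz0 : forall i, Rw i = true -> sum_in p C (fun j => M i j * extend z' v j) = 0).
  { intros i Hi. rewrite sum_in_extend. destruct (Nat.eq_dec i r) as [->|Hne]; [unfold v; field; auto|].
    pose proof (Hz i ltac:(apply remove_true; auto)) as E. rewrite sum_in_pivoted in E. unfold v.
    replace (sum_in p (remove C p0) (fun j => M i j * z' j))
      with (M i p0 / M r p0 * sum_in p (remove C p0) (fun j => M r j * z' j)) by lra.
    field; auto. }
  pose proof (Hinj _ Hz0 j ltac:(apply remove_true in Hj; tauto)) as E.
  apply remove_true in Hj as [_ Hj]. unfold extend in E. apply Nat.eqb_neq in Hj. rewrite Hj in E. auto.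
Qed.

Lemma pivot_solution f z' :
  (forall i, remove Rw r i = true ->
     sum_in p (remove C p0) (fun j => M' i j * z' j) = f i - M i p0 * f r / M r p0) ->
  forall i, Rw i = true ->
  sum_in p C (fun j => M i j * extend z' ((f r - sum_in p (remove C p0) (fun j => M r j * z' j)) / M r p0) j)
  = f i.
Proof.
  intros Hz' i Hi. rewrite sum_in_extend. destruct (Nat.eq_dec i r) as [->|Hne]; [field; auto|].
  pose proof (Hz' i ltac:(apply remove_true; auto)) as E. rewrite sum_in_pivoted in E.
  replace (sum_in p (remove C p0) (fun j => M i j * z' j)) with
    (f i - M i p0 * f r / M r p0 + M i p0 / M r p0 * sum_in p (remove C p0) (fun j => M r j * z' j))
    by lra.
  field; auto.
Qed.

End PivotElimination.

Lemma square_system_solvable : forall N p Rw C (M : nat -> nat -> R),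
  (card_in p C < N)%nat -> within p Rw -> within p C -> card_in p Rw = card_in p C ->
  injective_on p Rw C M ->
  forall f, exists z, forall i, Rw i = true -> sum_in p C (fun j => M i j * z j) = f i.
Proof.
  induction N; intros p Rw C M HN HsR HsC Hcard Hinj f; [lia|].
  destruct (classic (exists j, C j = true)) as [[p0 Hp0]|HCe].
  2:{ exists (fun _ => 0). intros i Hi. exfalso.
      assert (HC0 : forall q, card_in q C = 0%nat)
        by (induction q; simpl; auto; destruct (C q) eqn:E; [exfalso; eauto|lia]).
      pose proof (card_in_remove p Rw i HsR Hi). rewrite HC0 in Hcard. lia. }
  assert (Hpiv : exists r, Rw r = true /\ M r p0 <> 0).
  { apply NNPP. intros Hn. assert (1 = 0); [|lra].
    apply (Hinj (fun j => if Nat.eqb j p0 then 1 else 0)) in Hp0 as E;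
      [rewrite Nat.eqb_refl in E; auto|].
    intros i Hi. rewrite (sum_in_single p C _ p0 HsC Hp0).
    - rewrite Nat.eqb_refl. destruct (Req_dec (M i p0) 0) as [->|]; [ring|exfalso; eauto].
    - intros j _ Hne. apply Nat.eqb_neq in Hne. rewrite Hne; lra. }
  destruct Hpiv as [r [Hr HMr]].
  destruct (IHN p (remove Rw r) (remove C p0) (fun i j => M i j - M i p0 * M r j / M r p0))
    with (f := fun i => f i - M i p0 * f r / M r p0) as [z' Hz'].
  { pose proof (card_in_remove p C p0 HsC Hp0). lia. }
  { apply within_remove; auto. }
  { apply within_remove; auto. }
  { pose proof (card_in_remove p Rw r HsR Hr). pose proof (card_in_remove p C p0 HsC Hp0). lia. }
  { apply pivot_injective; auto. }
  eexists. apply (pivot_solution p Rw C M r p0); auto.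
Qed.

Definition scalar_inner : semi_inner.
Proof.
  refine {| ip := fun a b => a O * b O |}; intros; simpl; try ring. nra.
Defined.

Lemma irreducible_injective p S B w : within p S -> subgenerator p S B ->
  (forall i, S i = true -> 0 < w i) ->
  (forall j, S j = true -> sum_in p S (fun i => w i * B i j) <= 0) ->
  irreducible S B -> (exists s0, S s0 = true /\ sum_in p S (B s0) < 0) ->
  injective_on p S S B.
Proof.
  intros Hs [Hoff Hrow] Hw Hc Hirr [s0 [Hs0 Hs0r]] z Hz.
  pose proof (weighted_dissipation_identity scalar_inner p S B w (fun j _ => z j)) as HD.
  cbn [ip scalar_inner] in HD. unfold mx_apply in HD.
  rewrite (sum_in_ext p S _ (fun _ => 0)) in HD by (intros i Hi; rewrite Hz; auto; ring).
  rewrite sum_in_zero in HD.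
  set (S1 := sum_in p S (fun i => sum_in p S (fun j => w i * B i j * ((z i - z j) * (z i - z j))))) in HD.
  set (S2 := sum_in p S (fun i => (- (w i * sum_in p S (B i)) - sum_in p S (fun i' => w i' * B i' i))
                                  * (z i * z i))) in HD.
  assert (H1t : forall i j, S i = true -> S j = true -> 0 <= w i * B i j * ((z i - z j) * (z i - z j))).
  { intros i j Hi Hj. destruct (Nat.eq_dec i j) as [->|Hne]; [replace (z j - z j) with 0 by ring; lra|].
    pose proof (Hoff i j Hi Hj Hne). pose proof (Hw i Hi).
    apply Rmult_le_pos; [apply Rmult_le_pos; lra|apply Rle_0_sqr]. }
  assert (H2t : forall i, S i = true ->
    0 <= (- (w i * sum_in p S (B i)) - sum_in p S (fun i' => w i' * B i' i)) * (z i * z i)).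
  { intros i Hi. pose proof (Hrow i Hi). pose proof (Hw i Hi). pose proof (Hc i Hi).
    apply Rmult_le_pos; [nra|apply Rle_0_sqr]. }
  assert (HS1 : 0 <= S1) by (apply sum_in_nonneg; intros; apply sum_in_nonneg; intros; auto).
  assert (HS2 : 0 <= S2) by (apply sum_in_nonneg; auto).
  assert (HS1z : S1 = 0) by lra. assert (HS2z : S2 = 0) by lra.
  assert (Hzs0 : z s0 = 0).
  { pose proof (sum_in_nonneg_eq0 p S _ Hs H2t HS2z s0 Hs0) as E.
    pose proof (Hw s0 Hs0). pose proof (Hc s0 Hs0).
    apply Rmult_integral in E as [E|E]; [nra|]. apply Rmult_integral in E as [E|E]; auto. }
  apply (irreducible_zero_set S B z Hirr); eauto.
  intros i j Hi Hj Hzj Hzi.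
  pose proof (sum_in_nonneg_eq0 p S _ Hs (fun i Hi => sum_in_nonneg p S _ (fun j Hj => H1t i j Hi Hj))
                HS1z i Hi) as E.
  pose proof (sum_in_nonneg_eq0 p S _ Hs (fun j Hj => H1t i j Hi Hj) E j Hj) as E'.
  cbv beta in E'. rewrite Hzj, Rminus_0_r in E'. pose proof (Hw i Hi).
  apply Rmult_integral in E' as [E'|E']; [apply Rmult_integral in E' as [E'|E']; [lra|auto]|].
  exfalso. apply Rmult_integral in E' as [E'|E']; auto.
Qed.

(** * Gluing certificates along a class with no incoming edges *)

Lemma sqnorm_lincomb_le g p S A H y : within p A ->
  sqnorm g p S (fun s k => sum_in p A (fun a => H s a * y a k)) <=
  (sum_in p A (fun _ => 1) * sum_in p S (fun s => sum_in p A (fun a => H s a * H s a))) * sqnorm g p A y.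
Proof.
  intros HsA. set (cA := sum_in p A (fun _ => 1)). set (nA := sqnorm g p A y).
  set (h := fun s => sum_in p A (fun a => H s a * H s a)).
  replace (cA * sum_in p S h * nA) with (sum_in p S (fun s => cA * h s * nA))
    by (rewrite Rmult_assoc, <- sum_in_scal_r, <- sum_in_scal_l; apply sum_in_ext; intros; ring).
  apply sum_in_le; intros s Hs.
  pose proof (ip_sqnorm_sum_le g p A (fun _ => 1) (fun a k => H s a * y a k) ltac:(intros; lra)) as Hw.
  cbv beta in Hw.
  replace (fun k => sum_in p A (fun a => 1 * (H s a * y a k)))
    with (fun k => sum_in p A (fun a => H s a * y a k)) in Hw
    by (apply functional_extensionality; intros; apply sum_in_ext; intros; ring).
  eapply Rle_trans; [apply Hw|]. fold cA. rewrite Rmult_assoc.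
  apply Rmult_le_compat_l; [apply sum_in_nonneg; intros; lra|].
  unfold h. rewrite <- sum_in_scal_r. apply sum_in_le; intros a Ha.
  rewrite Rmult_1_l, ip_scal_l, ip_scal_r, <- Rmult_assoc.
  apply Rmult_le_compat_l; [apply Rle_0_sqr|]. apply sqnorm_ge_term; auto.
Qed.

Lemma qform_abs_le g p S P a b eta : within p S -> 0 < eta ->
  Rabs (qform g p S P a b) <=
  sum_in p S (fun s => sum_in p S (fun t => Rabs (P s t))) / 2 *
  (eta * sqnorm g p S a + / eta * sqnorm g p S b).
Proof.
  intros Hs Heta. set (M := (eta * sqnorm g p S a + / eta * sqnorm g p S b) / 2).
  apply Rle_trans with (sum_in p S (fun s => sum_in p S (fun t => Rabs (P s t) * M))).
  - apply sum_in_abs_le; intros s Hss. apply sum_in_abs_le; intros t Hts.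
    rewrite Rabs_mult. apply Rmult_le_compat_l; [apply Rabs_pos|].
    pose proof (ip_abs_le_young g (a s) (b t) eta Heta).
    pose proof (sqnorm_ge_term g p S a s Hs Hss). pose proof (sqnorm_ge_term g p S b t Hs Hts).
    assert (0 < / eta) by (apply Rinv_0_lt_compat; auto).
    unfold M. nra.
  - right. rewrite (sum_in_ext p S _ (fun s => sum_in p S (fun t => Rabs (P s t)) * M))
      by (intros; apply sum_in_scal_r).
    rewrite sum_in_scal_r. unfold M. field. lra.
Qed.

Definition decouple p A (H : nat -> nat -> R) (y : nat -> nat -> R) : nat -> nat -> R :=
  fun s k => y s k - sum_in p A (fun a => H s a * y a k).

Definition block_row (S : nat -> bool) (H : nat -> nat -> R) (s j : nat) : R :=
  if S j then (if Nat.eqb s j then 1 else 0) else - H s j.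

(* The matrix of the quadratic form [y |-> c P_A(y_A) + P_S(y_S - H y_A)],
   where [A = X \ S]; [block_row S H] is the block row [(I, -H)]. *)
Definition block_form (p : nat) (X S : nat -> bool) (PA PS H : nat -> nat -> R) (c : R) :
    nat -> nat -> R :=
  fun i j => c * (if setminus X S i && setminus X S j then PA i j else 0)
             + sum_in p S (fun s => sum_in p S (fun t =>
                 block_row S H s i * PS s t * block_row S H t j)).

Lemma block_form_sym p X S PA PS H c : (forall i j, PA i j = PA j i) -> (forall i j, PS i j = PS j i) ->
  forall i j, block_form p X S PA PS H c i j = block_form p X S PA PS H c j i.
Proof.
  intros HPA HPS i j. unfold block_form. f_equal.
  - rewrite andb_comm. destruct (_ && _); [rewrite HPA|]; auto.
  - rewrite sum_in_comm. apply sum_in_ext; intros; apply sum_in_ext; intros. rewrite HPS. ring.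
Qed.

Lemma qform_block_form g p X S PA PS H c a b : within p X -> (forall i, S i = true -> X i = true) ->
  qform g p X (block_form p X S PA PS H c) a b
  = c * qform g p (setminus X S) PA a b
    + qform g p S PS (decouple p (setminus X S) H a) (decouple p (setminus X S) H b).
Proof.
  intros HsX HSX. set (A := setminus X S).
  set (E := block_row S H).
  assert (HAX : forall i, A i = true -> X i = true) by (intros i Hi; apply setminus_true in Hi; tauto).
  assert (HsS : within p S) by (intros i Hi; apply HsX; auto).
  assert (ZE : forall (y : nat -> nat -> R) s, S s = true ->
                 (fun k => sum_in p X (fun j => E s j * y j k)) = decouple p A H y s).
  { intros y s Hs. apply functional_extensionality; intros k. unfold decouple.
    rewrite (sum_in_setminus p X S _ HSX). fold A. unfold Rminus. f_equal.
    - rewrite (sum_in_single p S _ s HsS Hs); [unfold E, block_row; rewrite Hs, Nat.eqb_refl; ring|].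
      intros j Hj Hne. unfold E, block_row. rewrite Hj. apply Nat.eqb_neq in Hne. rewrite Nat.eqb_sym, Hne. ring.
    - rewrite <- sum_in_opp. apply sum_in_ext; intros j Hj. unfold E, block_row.
      apply setminus_true in Hj as [_ Hj]. rewrite Hj. ring. }
  unfold qform, block_form. fold A E.
  transitivity (sum_in p X (fun i => sum_in p X (fun j => c * ((if A i && A j then PA i j else 0) * g (a i) (b j))))
     + sum_in p X (fun i => sum_in p X (fun j => sum_in p S (fun s => sum_in p S (fun t =>
          E s i * PS s t * E t j * g (a i) (b j)))))).
  { rewrite <- sum_in_plus. apply sum_in_ext; intros i Hi. rewrite <- sum_in_plus.
    apply sum_in_ext; intros j Hj. rewrite Rmult_plus_distr_r. f_equal; [ring|].
    rewrite <- sum_in_scal_r. apply sum_in_ext; intros. rewrite <- sum_in_scal_r; auto. }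
  f_equal.
  - rewrite <- sum_in_scal_l, (sum_in_subset p A X _ HAX). apply sum_in_ext; intros i Hi.
    destruct (A i) eqn:EA.
    + rewrite <- sum_in_scal_l, (sum_in_subset p A X _ HAX). apply sum_in_ext; intros j Hj.
      destruct (A j); simpl; ring.
    + rewrite (sum_in_ext p X _ (fun _ => 0)); [apply sum_in_zero|intros; simpl; ring].
  - rewrite sum_in_comm4.
    apply sum_in_ext; intros s Hs. apply sum_in_ext; intros t Ht.
    rewrite <- (ZE a s Hs), <- (ZE b t Ht), ip_sum_in_l, <- sum_in_scal_l.
    apply sum_in_ext; intros i Hi. rewrite ip_sum_in_r, <- !sum_in_scal_l.
    apply sum_in_ext; intros j Hj. ring.
Qed.

Section HierarchicalCertificate.
Variables (p : nat) (X S : nat -> bool) (B PA PS H : nat -> nat -> R) (lA LA eA lS LS eS G : R).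
Let A := setminus X S.
Hypotheses (HsX : within p X) (HSX : forall i, S i = true -> X i = true)
  (Hcl : no_edge_into X B S)
  (HA : lyapunov_certificate p A B PA lA LA eA)
  (HS : lyapunov_certificate p S B PS lS LS eS)
  (HH : forall s a, S s = true -> A a = true -> sum_in p S (fun t => B s t * H t a) + B s a = 0)
  (HG : 0 <= G)
  (* the inverse bound on [S] is only needed when [H] couples [S] to [A] *)
  (Hopt : (forall s a, H s a = 0) \/
          forall g z, sqnorm g p S z <= G * sqnorm g p S (mx_apply p S B z)).

Let KH := sum_in p A (fun _ => 1) * sum_in p S (fun s => sum_in p A (fun a => H s a * H s a)).
Let PiS := sum_in p S (fun s => sum_in p S (fun t => Rabs (PS s t))).
(* [eta] and [c] make the cross term [P_S(z, H (B y)_A)] absorbable by [eS/2] and [c eA]. *)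
Let eta := eS / (PiS * G + 1).
Let c := 1 + PiS * KH / (2 * eta * eA).
Let m := Rmin (c * lA) lS.

Lemma within_A : within p A.
Proof. intros i Hi. apply setminus_true in Hi. apply HsX; tauto. Qed.

Lemma within_S : within p S.
Proof. intros i Hi. apply HsX, HSX; auto. Qed.

Lemma KH_nonneg : 0 <= KH.
Proof.
  apply Rmult_le_pos; [apply sum_in_nonneg; intros; lra|].
  apply sum_in_nonneg; intros; apply sum_in_nonneg; intros; apply Rle_0_sqr.
Qed.

Lemma PiS_nonneg : 0 <= PiS.
Proof. apply sum_in_nonneg; intros; apply sum_in_nonneg; intros; apply Rabs_pos. Qed.

Lemma eta_pos : 0 < eta.
Proof.
  destruct HS as (_ & _ & HeS & _). pose proof PiS_nonneg.
  apply Rdiv_lt_0_compat; [auto|]. nra.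
Qed.

Lemma c_ge_1 : 1 <= c.
Proof.
  destruct HA as (_ & _ & HeA & _). pose proof PiS_nonneg. pose proof KH_nonneg. pose proof eta_pos.
  assert (0 <= PiS * KH / (2 * eta * eA)) by (apply Rmult_le_pos; [nra|left; apply Rinv_0_lt_compat; nra]).
  unfold c. lra.
Qed.

Lemma sqnorm_split g y : sqnorm g p X y = sqnorm g p S y + sqnorm g p A y.
Proof. apply sum_in_setminus; auto. Qed.

Lemma mx_apply_on_A y a : A a = true -> mx_apply p X B y a = mx_apply p A B y a.
Proof.
  intros Ha. apply functional_extensionality; intros k. unfold mx_apply.
  rewrite (sum_in_setminus p X S _ HSX). fold A.
  rewrite (sum_in_ext p S _ (fun _ => 0)), sum_in_zero; [ring|].
  intros j Hj. apply setminus_true in Ha as [Ha Ha']. rewrite (Hcl a j Ha Hj Ha'). ring.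
Qed.

Lemma mx_apply_on_S y s : S s = true -> mx_apply p X B y s = mx_apply p S B (decouple p A H y) s.
Proof.
  intros Hs. apply functional_extensionality; intros k. unfold mx_apply, decouple.
  rewrite (sum_in_setminus p X S _ HSX). fold A.
  rewrite (sum_in_ext p S (fun j => B s j * (y j k - sum_in p A (fun a => H j a * y a k)))
             (fun j => B s j * y j k - sum_in p A (fun a => B s j * H j a * y a k)))
    by (intros; rewrite Rmult_minus_distr_l, <- sum_in_scal_l;
        f_equal; apply sum_in_ext; intros; ring).
  rewrite sum_in_minus, sum_in_comm.
  rewrite (sum_in_ext p A (fun a => sum_in p S (fun j => B s j * H j a * y a k)) (fun a => - (B s a * y a k)))
    by (intros a Ha; rewrite sum_in_scal_r; replace (sum_in p S (fun j => B s j * H j a)) with (- B s a)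
          by (pose proof (HH s a Hs Ha); lra); ring).
  rewrite sum_in_opp. ring.
Qed.

Lemma block_lower g y :
  m / (2 + 2 * KH) * sqnorm g p X y <=
  c * qform g p A PA y y + qform g p S PS (decouple p A H y) (decouple p A H y).
Proof.
  destruct HA as (HlA & _ & _ & _ & HAb). destruct HS as (HlS & _ & _ & _ & HSb).
  set (z := decouple p A H y).
  destruct (HAb g y) as [HA1 _]. destruct (HSb g z) as [HS1 _].
  pose proof KH_nonneg. pose proof c_ge_1. set (Hy := fun s k => sum_in p A (fun a => H s a * y a k)).
  assert (Hmix : sqnorm g p S Hy <= KH * sqnorm g p A y) by (apply sqnorm_lincomb_le, within_A).
  assert (Hyz : sqnorm g p S y <= 2 * sqnorm g p S z + 2 * sqnorm g p S Hy).
  { unfold sqnorm. rewrite <- !sum_in_scal_l, <- sum_in_plus. apply sum_in_le; intros s Hs.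
    replace (y s) with (fun k => z s k + Hy s k)
      by (apply functional_extensionality; intros; unfold z, decouple, Hy; ring).
    apply ip_sqnorm_plus_le. }
  pose proof (sqnorm_nonneg g p A y). pose proof (sqnorm_nonneg g p S z).
  assert (Hm : 0 < m) by (apply Rmin_glb_lt; nra).
  assert (m <= c * lA) by apply Rmin_l. assert (m <= lS) by apply Rmin_r.
  assert (m * sqnorm g p A y <= c * qform g p A PA y y) by nra.
  assert (m * sqnorm g p S z <= qform g p S PS z z) by nra.
  rewrite sqnorm_split.
  apply Rle_trans with (m / (2 + 2 * KH) * (2 * sqnorm g p S z + (2 * KH + 1) * sqnorm g p A y)).
  - apply Rmult_le_compat_l; [apply Rmult_le_pos; [lra|left; apply Rinv_0_lt_compat; lra]|nra].
  - apply Rle_trans with (m * sqnorm g p S z + m * sqnorm g p A y); [|lra].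
    apply (Rmult_le_reg_l (2 + 2 * KH)); [lra|].
    replace ((2 + 2 * KH) * (m / (2 + 2 * KH) * (2 * sqnorm g p S z + (2 * KH + 1) * sqnorm g p A y)))
      with (m * (2 * sqnorm g p S z + (2 * KH + 1) * sqnorm g p A y)) by (field; lra).
    assert (0 <= KH * (m * sqnorm g p S z)) by (apply Rmult_le_pos; [|apply Rmult_le_pos]; lra).
    assert (0 <= m * sqnorm g p A y) by (apply Rmult_le_pos; lra).
    nra.
Qed.

Lemma block_upper g y :
  c * qform g p A PA y y + qform g p S PS (decouple p A H y) (decouple p A H y) <=
  (c * LA + 2 * LS * (KH + 1)) * sqnorm g p X y.
Proof.
  destruct HA as (_ & HLA & _ & _ & HAb). destruct HS as (_ & HLS & _ & _ & HSb).
  destruct (HAb g y) as [_ [HA2 _]]. destruct (HSb g (decouple p A H y)) as [_ [HS2 _]].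
  pose proof KH_nonneg. pose proof c_ge_1.
  assert (Hmix : sqnorm g p S (fun s k => sum_in p A (fun a => H s a * y a k)) <= KH * sqnorm g p A y)
    by (apply sqnorm_lincomb_le, within_A).
  assert (Hzy : sqnorm g p S (decouple p A H y) <=
                2 * sqnorm g p S y + 2 * sqnorm g p S (fun s k => sum_in p A (fun a => H s a * y a k))).
  { unfold sqnorm at 1 2 3. rewrite <- !sum_in_scal_l, <- sum_in_plus.
    apply sum_in_le; intros s Hs. apply ip_sqnorm_minus_le. }
  pose proof (sqnorm_nonneg g p S y). pose proof (sqnorm_nonneg g p A y).
  rewrite sqnorm_split.
  assert (c * qform g p A PA y y <= c * (LA * sqnorm g p A y)) by (apply Rmult_le_compat_l; lra).
  assert (qform g p S PS (decouple p A H y) (decouple p A H y)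
          <= LS * (2 * sqnorm g p S y + 2 * (KH * sqnorm g p A y))) by
    (eapply Rle_trans; [apply HS2|]; apply Rmult_le_compat_l; lra).
  assert (0 <= c * LA * sqnorm g p S y) by (apply Rmult_le_pos; [nra|auto]).
  assert (0 <= LS * KH * sqnorm g p S y) by (apply Rmult_le_pos; [nra|auto]).
  assert (0 <= LS * sqnorm g p A y) by nra.
  nra.
Qed.

Lemma block_cross_le g y :
  let z := decouple p A H y in
  let u := fun s k => sum_in p A (fun a => H s a * mx_apply p A B y a k) in
  - qform g p S PS z u <=
  eS / 2 * sqnorm g p S (mx_apply p S B z) + PiS * KH / (2 * eta) * sqnorm g p A (mx_apply p A B y).
Proof.
  intros z u. destruct HS as (_ & _ & HeS & _).
  set (n1 := sqnorm g p A (mx_apply p A B y)). set (n2 := sqnorm g p S (mx_apply p S B z)).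
  assert (0 <= n1) by apply sqnorm_nonneg. assert (0 <= n2) by apply sqnorm_nonneg.
  pose proof PiS_nonneg. pose proof KH_nonneg. pose proof eta_pos.
  assert (0 <= PiS * KH / (2 * eta)) by (apply Rmult_le_pos; [nra|left; apply Rinv_0_lt_compat; lra]).
  destruct Hopt as [Hz0|Hinv].
  - enough (qform g p S PS z u = 0) by nra.
    rewrite (qform_ext g p S PS z z u (fun _ _ => 0)); auto.
    + unfold qform. rewrite (sum_in_ext p S _ (fun _ => 0)); [apply sum_in_zero|]. intros i _.
      rewrite (sum_in_ext p S _ (fun _ => 0)); [apply sum_in_zero|]. intros j _. rewrite ip_zero_r. ring.
    + intros s _. apply functional_extensionality; intros k. unfold u.
      rewrite (sum_in_ext p A _ (fun _ => 0)); [apply sum_in_zero|]. intros. rewrite Hz0. ring.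
  - pose proof (qform_abs_le g p S PS z u eta within_S eta_pos) as Hcr. fold PiS in Hcr.
    pose proof (Hinv g z) as Hiz. fold n2 in Hiz.
    assert (Hw : sqnorm g p S u <= KH * n1) by (apply sqnorm_lincomb_le, within_A).
    pose proof (Rle_abs (- qform g p S PS z u)) as Hab. rewrite Rabs_Ropp in Hab.
    assert (eta * (PiS * G) <= eS).
    { unfold eta. apply (Rmult_le_reg_r (PiS * G + 1)); [nra|].
      replace (eS / (PiS * G + 1) * (PiS * G) * (PiS * G + 1)) with (eS * (PiS * G)) by (field; nra). nra. }
    assert (PiS / 2 * (eta * sqnorm g p S z) <= eS / 2 * n2).
    { apply Rle_trans with (PiS / 2 * (eta * (G * n2))).
      - apply Rmult_le_compat_l; [lra|]. apply Rmult_le_compat_l; lra.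
      - replace (PiS / 2 * (eta * (G * n2))) with (eta * (PiS * G) / 2 * n2) by field.
        apply Rmult_le_compat_r; lra. }
    assert (PiS / 2 * (/ eta * sqnorm g p S u) <= PiS * KH / (2 * eta) * n1).
    { replace (PiS * KH / (2 * eta) * n1) with (PiS / 2 * (/ eta * (KH * n1))) by (field; lra).
      apply Rmult_le_compat_l; [lra|]. apply Rmult_le_compat_l; [left; apply Rinv_0_lt_compat|]; lra. }
    lra.
Qed.

Lemma block_dissipation g y :
  let v := mx_apply p X B y in
  c * qform g p A PA y v + qform g p S PS (decouple p A H y) (decouple p A H v) <=
  - Rmin eA (eS / 2) * sqnorm g p X v.
Proof.
  intros v. destruct HA as (_ & _ & HeA & _ & HAb). destruct HS as (_ & _ & HeS & _ & HSb).
  set (z := decouple p A H y).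
  set (u := fun s k => sum_in p A (fun a => H s a * mx_apply p A B y a k)).
  pose proof (block_cross_le g y) as Hcross. cbv zeta in Hcross. fold z u in Hcross.
  rewrite (qform_ext g p A PA y y v (mx_apply p A B y)) by (auto; intros; apply mx_apply_on_A; auto).
  rewrite (qform_ext g p S PS z z (decouple p A H v) (fun s k => mx_apply p S B z s k - u s k)).
  2:{ auto. }
  2:{ intros s Hs. apply functional_extensionality; intros k. unfold decouple at 1, u, v.
      rewrite mx_apply_on_S by auto. f_equal. apply sum_in_ext; intros a Ha. rewrite mx_apply_on_A; auto. }
  rewrite qform_minus_r, sqnorm_split, (sqnorm_ext g p S v (mx_apply p S B z)), (sqnorm_ext g p A v (mx_apply p A B y))
    by (intros; first [apply mx_apply_on_S|apply mx_apply_on_A]; auto).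
  set (n1 := sqnorm g p A (mx_apply p A B y)). set (n2 := sqnorm g p S (mx_apply p S B z)) in *.
  fold n1 n2 in Hcross.
  assert (Hn1 : 0 <= n1) by apply sqnorm_nonneg. assert (Hn2 : 0 <= n2) by apply sqnorm_nonneg.
  destruct (HAb g y) as [_ [_ HA3]]. destruct (HSb g z) as [_ [_ HS3]]. fold n1 in HA3. fold n2 in HS3.
  assert (Hc : c * eA = eA + PiS * KH / (2 * eta)) by (unfold c; pose proof eta_pos; field; lra).
  assert (Hfa : c * qform g p A PA y (mx_apply p A B y) <= - (c * eA) * n1)
    by (pose proof c_ge_1; nra).
  rewrite Hc in Hfa.
  assert (Rmin eA (eS / 2) <= eA) by apply Rmin_l. assert (Rmin eA (eS / 2) <= eS / 2) by apply Rmin_r.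
  assert (Rmin eA (eS / 2) * n1 <= eA * n1) by (apply Rmult_le_compat_r; auto).
  assert (Rmin eA (eS / 2) * n2 <= eS / 2 * n2) by (apply Rmult_le_compat_r; auto).
  lra.
Qed.

Lemma block_lyapunov : has_lyapunov p X B.
Proof.
  pose proof HA as (HlA & HLA & HeA & HPA & _). pose proof HS as (HlS & HLS & HeS & HPS & _).
  pose proof KH_nonneg. pose proof c_ge_1.
  exists (block_form p X S PA PS H c), (m / (2 + 2 * KH)), (c * LA + 2 * LS * (KH + 1)), (Rmin eA (eS / 2)).
  split; [apply Rdiv_lt_0_compat; [apply Rmin_glb_lt; nra|lra]|].
  split; [nra|]. split; [apply Rmin_glb_lt; lra|]. split; [apply block_form_sym; auto|].
  intros g y. rewrite !qform_block_form by auto. fold A.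
  split; [apply block_lower|]. split; [apply block_upper|apply block_dissipation].
Qed.

End HierarchicalCertificate.

(** * Existence of certificates *)

Lemma subgenerator_subset p X Y B : within p X -> subgenerator p X B ->
  (forall i, Y i = true -> X i = true) -> subgenerator p Y B.
Proof.
  intros Hs [Hoff Hrow] HYX. split; [intros; apply Hoff; auto|].
  intros i Hi. pose proof (Hrow i (HYX i Hi)) as Hr. rewrite (sum_in_setminus p X Y _ HYX) in Hr.
  enough (0 <= sum_in p (setminus X Y) (B i)) by lra.
  apply sum_in_nonneg. intros j Hj. apply setminus_true in Hj as [Hj HYj].
  apply Hoff; auto. intros ->. congruence.
Qed.

Lemma fed_row_deficit p X S B s0 a0 : within p X -> subgenerator p X B ->
  (forall i, S i = true -> X i = true) -> S s0 = true -> setminus X S a0 = true ->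
  B s0 a0 <> 0 -> sum_in p S (B s0) < 0.
Proof.
  intros Hs [Hoff Hrow] HSX Hs0 Ha0 HBne. pose proof (Hrow s0 (HSX s0 Hs0)) as Hr.
  rewrite (sum_in_setminus p X S _ HSX) in Hr.
  assert (Hnn : forall j, setminus X S j = true -> 0 <= B s0 j).
  { intros j Hj. apply setminus_true in Hj as [Hj HSj]. apply Hoff; auto. intros ->. congruence. }
  assert (Hsub : within p (setminus X S)) by (intros i Hi; apply setminus_true in Hi; apply Hs; tauto).
  pose proof (sum_in_ge_term p _ (B s0) a0 Hsub Hnn Ha0). pose proof (Hnn a0 Ha0). lra.
Qed.

Lemma empty_lyapunov p X B : (forall i, X i = false) -> has_lyapunov p X B.
Proof.
  intros He. exists (fun _ _ => 0), 1, 1, 1.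
  repeat split; try lra. all: unfold sqnorm, qform; rewrite !(sum_in_empty p X) by auto; lra.
Qed.

Lemma solve_columns p S (M : nat -> nat -> R) :
  (forall f, exists z, forall i, S i = true -> sum_in p S (fun j => M i j * z j) = f i) ->
  forall F : nat -> nat -> R,
  exists Z, forall i a, S i = true -> sum_in p S (fun j => M i j * Z j a) = F i a.
Proof.
  intros Hsol F.
  exists (fun j a => proj1_sig (constructive_indefinite_description _ (Hsol (fun i => F i a))) j).
  intros i a Hi. exact (proj2_sig (constructive_indefinite_description _ (Hsol (fun i => F i a))) i Hi).
Qed.

Lemma inverse_bound p S B : within p S -> injective_on p S S B ->
  (forall f, exists z, forall i, S i = true -> sum_in p S (fun j => B i j * z j) = f i) ->
  exists G, 0 <= G /\ forall g z, sqnorm g p S z <= G * sqnorm g p S (mx_apply p S B z).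
Proof.
  intros Hs Hinj Hsol.
  destruct (solve_columns p S B Hsol (fun i u => if Nat.eqb i u then 1 else 0)) as [Gm HGm].
  exists (sum_in p S (fun _ => 1) * sum_in p S (fun s => sum_in p S (fun u => Gm s u * Gm s u))).
  split.
  { apply Rmult_le_pos; [apply sum_in_nonneg; intros; lra|].
    apply sum_in_nonneg; intros; apply sum_in_nonneg; intros; apply Rle_0_sqr. }
  intros g z.
  rewrite (sqnorm_ext g p S z (fun s k => sum_in p S (fun u => Gm s u * mx_apply p S B z u k))).
  { apply sqnorm_lincomb_le; auto. }
  intros s Hs'. apply functional_extensionality; intros k.
  set (d := fun t => sum_in p S (fun u => Gm t u * mx_apply p S B z u k) - z t k).
  enough (d s = 0) by (unfold d in *; lra).
  apply Hinj; auto. intros i Hi. unfold d.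
  rewrite (sum_in_ext p S _ (fun j => sum_in p S (fun u => B i j * Gm j u * mx_apply p S B z u k) - B i j * z j k))
    by (intros; rewrite Rmult_minus_distr_l, <- sum_in_scal_l; f_equal; apply sum_in_ext; intros; ring).
  rewrite sum_in_minus, sum_in_comm.
  rewrite (sum_in_ext p S _ (fun u => (if Nat.eqb i u then 1 else 0) * mx_apply p S B z u k))
    by (intros u Hu; rewrite sum_in_scal_r, HGm; auto).
  rewrite sum_in_delta; auto. unfold mx_apply. ring.
Qed.

Lemma subgenerator_lyapunov : forall N p X B, (card_in p X < N)%nat -> within p X ->
  subgenerator p X B -> has_lyapunov p X B.
Proof.
  induction N; intros p X B HN Hs Hsg; [lia|].
  destruct (classic (exists i, X i = true)) as [Hne|Hemp].
  2:{ apply empty_lyapunov. intros i. destruct (X i) eqn:E; auto. exfalso; eauto. }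
  destruct (exists_irreducible_class (S (card_in p X)) p X B ltac:(lia) Hs Hne)
    as [S [HSX [[s1 Hs1] [Hcl Hirr]]]].
  assert (HsS : within p S) by (intros i Hi; apply Hs; auto).
  assert (HsgS : subgenerator p S B) by (apply (subgenerator_subset p X); auto).
  set (A := setminus X S).
  assert (HAX : forall i, A i = true -> X i = true) by (intros i Hi; apply setminus_true in Hi; tauto).
  destruct (IHN p A B) as (PA & lA & LA & eA & HA).
  { enough (card_in p A < card_in p X)%nat by lia.
    apply card_in_lt; auto. exists s1. split; [apply HsS; auto|]. split; [apply HSX; auto|].
    unfold A, setminus. rewrite Hs1, andb_false_r. auto. }
  { intros i Hi; apply Hs; auto. }
  { apply (subgenerator_subset p X); auto. }
  destruct (irreducible_positive_weights p S B HsS HsgS Hirr ltac:(eauto)) as [w [Hw Hwc]].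
  destruct (diagonal_lyapunov p S B w HsS HsgS Hw Hwc) as (PS & lS & LS & eS & HS).
  destruct (classic (exists s a, S s = true /\ A a = true /\ B s a <> 0))
    as [[s0 [a0 [Hs0 [Ha0 HBne]]]]|Hdec].
  - (* [S] is fed by [A], so [B] is invertible on [S] *)
    assert (Hneg : exists s, S s = true /\ sum_in p S (B s) < 0)
      by (exists s0; split; [|apply (fed_row_deficit p X S B s0 a0)]; auto).
    pose proof (irreducible_injective p S B w HsS HsgS Hw Hwc Hirr Hneg) as Hinj.
    assert (Hsol : forall f, exists z, forall i, S i = true -> sum_in p S (fun j => B i j * z j) = f i)
      by (apply (square_system_solvable (Datatypes.S (card_in p S))); auto).
    destruct (solve_columns p S B Hsol (fun s a => - B s a)) as [H HH].
    destruct (inverse_bound p S B HsS Hinj Hsol) as [G [HG Hinv]].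
    apply (block_lyapunov p X S B PA PS H lA LA eA lS LS eS G); auto.
    intros s a Hs' Ha. rewrite HH; auto. ring.
  - apply (block_lyapunov p X S B PA PS (fun _ _ => 0) lA LA eA lS LS eS 0); auto; [|lra].
    intros s a Hs' Ha. rewrite (sum_in_ext p S _ (fun _ => 0)), sum_in_zero by (intros; ring).
    destruct (Req_dec (B s a) 0) as [->|E]; [ring|]. exfalso; apply Hdec; eauto.
Qed.

(** * Energy decay along integral solutions *)

Definition full (p : nat) : nat -> bool := fun i => Nat.ltb i p.

Lemma within_full p : within p (full p).
Proof. intros i Hi. apply Nat.ltb_lt; auto. Qed.

Lemma sum_in_full p f : sum_in p (full p) f = fsum p f.
Proof. apply fsum_ext; intros i Hi. unfold full. apply Nat.ltb_lt in Hi. rewrite Hi; auto. Qed.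

Definition euclid (n : nat) : semi_inner.
Proof.
  refine {| ip := fun a b => fsum n (fun k => a k * b k) |}.
  - intros a b. apply fsum_ext; intros; ring.
  - intros a b c. rewrite <- fsum_plus. apply fsum_ext; intros; ring.
  - intros r a c. rewrite <- fsum_scal_l. apply fsum_ext; intros; ring.
  - intros a. apply fsum_nonneg; intros; apply Rle_0_sqr.
Defined.

Definition quad_inner (n : nat) (M : nat -> nat -> R)
  (Hsym : forall k l, (k < n)%nat -> (l < n)%nat -> M k l = M l k)
  (Hpos : forall v : nat -> R, 0 <= fsum n (fun k => fsum n (fun l => v k * M k l * v l))) :
  semi_inner.
Proof.
  refine {| ip := fun a b => fsum n (fun k => fsum n (fun l => a k * M k l * b l)) |}.
  - intros a b. rewrite fsum_comm. apply fsum_ext; intros; apply fsum_ext; intros.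
    rewrite Hsym by auto. ring.
  - intros a b c. rewrite <- fsum_plus.
    apply fsum_ext; intros; rewrite <- fsum_plus; apply fsum_ext; intros; ring.
  - intros r a c. rewrite <- fsum_scal_l.
    apply fsum_ext; intros; rewrite <- fsum_scal_l; apply fsum_ext; intros; ring.
  - exact Hpos.
Defined.

Lemma vnorm_sqnorm n p y : vnorm n p y = sqrt (sqnorm (euclid n) p (full p) y).
Proof. unfold vnorm, sqnorm. rewrite sum_in_full. f_equal. apply fsum_ext; intros. simpl. apply fsum_ext; intros. ring. Qed.

(* The energy derivative [<x, (P (x) I)(Gamma (x) Q) x>] is the dissipation
   term of the certificate for the semi-inner product of [Q]. *)
Lemma qform_kron_apply n p Gamma P M Hsym Hpos y : (forall i j, P i j = P j i) ->
  qform (euclid n) p (full p) P (fun i k => kron_apply n p Gamma M y i k) y =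
  qform (quad_inner n M Hsym Hpos) p (full p) P y (mx_apply p (full p) Gamma y).
Proof.
  intros HP. rewrite qform_sym by auto. unfold qform. apply sum_in_ext; intros i _.
  apply sum_in_ext; intros j _. f_equal. simpl. unfold kron_apply, mx_apply.
  apply fsum_ext; intros k _.
  transitivity (y i k * fsum n (fun l => M k l * fsum p (fun m => Gamma j m * y m l))).
  - f_equal.
    transitivity (fsum p (fun m => fsum n (fun l => M k l * (Gamma j m * y m l)))).
    + apply fsum_ext; intros. rewrite <- fsum_scal_l. apply fsum_ext; intros; ring.
    + rewrite fsum_comm. apply fsum_ext; intros. rewrite <- fsum_scal_l. auto.
  - rewrite <- fsum_scal_l. apply fsum_ext; intros l _. rewrite sum_in_full. ring.
Qed.

Lemma ex_RInt_scal_l f a b c : ex_RInt f a b -> ex_RInt (fun u => c * f u) a b.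
Proof. apply (ex_RInt_scal f a b c). Qed.

Lemma ex_RInt_scal_r f a b c : ex_RInt f a b -> ex_RInt (fun u => f u * c) a b.
Proof.
  intros H. apply (ex_RInt_ext (fun u => c * f u)); [intros; apply Rmult_comm|].
  apply ex_RInt_scal_l; auto.
Qed.

Lemma RInt_scal_r f a b c : ex_RInt f a b -> RInt (fun u => f u * c) a b = RInt f a b * c.
Proof.
  intros H. rewrite (RInt_ext _ (fun u => c * f u)) by (intros; apply Rmult_comm).
  rewrite Rmult_comm. exact (RInt_scal f a b c H).
Qed.

Lemma ex_RInt_fsum m (h : nat -> R -> R) a b : (forall j, (j < m)%nat -> ex_RInt (h j) a b) ->
  ex_RInt (fun u => fsum m (fun j => h j u)) a b.
Proof.
  induction m; intros H; simpl; [apply ex_RInt_const|].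
  apply (ex_RInt_plus (fun u => fsum m (fun j => h j u)) (h m)); [apply IHm; intros|apply H]; auto.
Qed.

Lemma RInt_fsum m (h : nat -> R -> R) a b : (forall j, (j < m)%nat -> ex_RInt (h j) a b) ->
  RInt (fun u => fsum m (fun j => h j u)) a b = fsum m (fun j => RInt (h j) a b).
Proof.
  induction m; intros H; simpl; [rewrite RInt_const; apply Rmult_0_r|].
  rewrite (RInt_plus (fun u => fsum m (fun j => h j u)) (h m)); [|apply ex_RInt_fsum; auto|auto].
  rewrite IHm; auto.
Qed.

Lemma qform_euclid n p P a b : qform (euclid n) p (full p) P a b =
  fsum p (fun i => fsum n (fun k => a i k * fsum p (fun j => P i j * b j k))).
Proof.
  unfold qform. rewrite sum_in_full. apply fsum_ext; intros i _. rewrite sum_in_full. simpl.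
  transitivity (fsum p (fun j => fsum n (fun k => a i k * (P i j * b j k)))).
  { apply fsum_ext; intros. rewrite <- fsum_scal_l. apply fsum_ext; intros; ring. }
  rewrite fsum_comm. apply fsum_ext; intros. rewrite <- fsum_scal_l. apply fsum_ext; intros; ring.
Qed.

Lemma qform_euclid_RInt n p P (a : R -> nat -> nat -> R) b s t :
  (forall i k, (i < p)%nat -> (k < n)%nat -> ex_RInt (fun u => a u i k) s t) ->
  ex_RInt (fun u => qform (euclid n) p (full p) P (a u) b) s t /\
  qform (euclid n) p (full p) P (fun i k => RInt (fun u => a u i k) s t) b =
  RInt (fun u => qform (euclid n) p (full p) P (a u) b) s t.
Proof.
  intros Ha.
  replace (fun u => qform (euclid n) p (full p) P (a u) b) with
    (fun u => fsum p (fun i => fsum n (fun k => a u i k * fsum p (fun j => P i j * b j k))))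
    by (apply functional_extensionality; intros; symmetry; apply qform_euclid).
  rewrite qform_euclid. split.
  - apply ex_RInt_fsum; intros. apply ex_RInt_fsum; intros. apply ex_RInt_scal_r; auto.
  - rewrite RInt_fsum; [|intros; apply ex_RInt_fsum; intros; apply ex_RInt_scal_r; auto].
    apply fsum_ext; intros i Hi. rewrite RInt_fsum; [|intros; apply ex_RInt_scal_r; auto].
    apply fsum_ext; intros k Hk. rewrite RInt_scal_r; auto.
Qed.

Lemma qform_euclid_abs_le n p P a b Ma Mb : 0 <= Ma -> 0 <= Mb ->
  (forall i k, (i < p)%nat -> (k < n)%nat -> Rabs (a i k) <= Ma) ->
  (forall i k, (i < p)%nat -> (k < n)%nat -> Rabs (b i k) <= Mb) ->
  Rabs (qform (euclid n) p (full p) P a b) <=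
  fsum p (fun i => fsum p (fun j => Rabs (P i j))) * (INR n * (Ma * Mb)).
Proof.
  intros HMa HMb Ha Hb. unfold qform. rewrite sum_in_full, <- fsum_scal_r.
  apply fsum_abs_le; intros i Hi. rewrite sum_in_full, <- fsum_scal_r.
  apply fsum_abs_le; intros j Hj. rewrite Rabs_mult.
  apply Rmult_le_compat_l; [apply Rabs_pos|]. simpl.
  rewrite <- fsum_const. apply fsum_abs_le; intros k Hk. rewrite Rabs_mult.
  apply Rmult_le_compat; try apply Rabs_pos; auto.
Qed.

Lemma kron_apply_abs_le n p Gamma M y i k Mm My : 0 <= Mm -> 0 <= My ->
  (i < p)%nat -> (k < n)%nat ->
  (forall k l, (k < n)%nat -> (l < n)%nat -> Rabs (M k l) <= Mm) ->
  (forall j l, (j < p)%nat -> (l < n)%nat -> Rabs (y j l) <= My) ->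
  Rabs (kron_apply n p Gamma M y i k) <=
  fsum p (fun i => fsum p (fun j => Rabs (Gamma i j))) * (INR n * (Mm * My)).
Proof.
  intros HMm HMy Hi Hk HM Hy. unfold kron_apply.
  apply Rle_trans with (fsum p (fun j => Rabs (Gamma i j)) * (INR n * (Mm * My))).
  - rewrite <- fsum_scal_r. apply fsum_abs_le; intros j Hj. rewrite Rabs_mult.
    apply Rmult_le_compat_l; [apply Rabs_pos|]. rewrite <- fsum_const.
    apply fsum_abs_le; intros l Hl. rewrite Rabs_mult.
    apply Rmult_le_compat; try apply Rabs_pos; auto.
  - apply Rmult_le_compat_r; [apply Rmult_le_pos; [apply pos_INR|nra]|].
    apply (fsum_ge_term p (fun i => fsum p (fun j => Rabs (Gamma i j)))); auto.
    intros; apply fsum_nonneg; intros; apply Rabs_pos.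
Qed.

Lemma le_of_quadratic_increments (V : R -> R) C T : 0 <= C -> 0 <= T ->
  (forall s t, 0 <= s -> s <= t -> t <= T -> V t - V s <= C * ((t - s) * (t - s))) ->
  V T <= V 0.
Proof.
  intros HC HT Hinc.
  assert (HN : forall N, (0 < N)%nat -> V T - V 0 <= C * (T * T) * / INR N).
  { intros N HN. assert (HNpos : 0 < INR N) by (apply lt_0_INR; auto).
    set (h := T / INR N). assert (Hh : 0 <= h) by (apply Rmult_le_pos; [lra|left; apply Rinv_0_lt_compat; lra]).
    assert (Hk : forall k, (k <= N)%nat -> V (INR k * h) - V 0 <= INR k * (C * (h * h))).
    { induction k; intros Hk; [simpl; rewrite Rmult_0_l; lra|].
      assert (HkN : INR (S k) <= INR N) by (apply le_INR; auto).
      assert (Hkh : INR (S k) * h <= T).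
      { replace T with (INR N * h) by (unfold h; field; lra). apply Rmult_le_compat_r; auto. }
      pose proof (IHk ltac:(lia)).
      pose proof (Hinc (INR k * h) (INR (S k) * h)
                    ltac:(apply Rmult_le_pos; [apply pos_INR|lra]) ltac:(rewrite S_INR; nra) Hkh).
      rewrite S_INR in *. replace ((INR k + 1) * h - INR k * h) with h in H0 by ring. nra. }
    specialize (Hk N (Nat.le_refl N)).
    replace (INR N * h) with T in Hk by (unfold h; field; lra).
    replace (INR N * (C * (h * h))) with (C * (T * T) * / INR N) in Hk by (unfold h; field; lra).
    auto. }
  enough (V T - V 0 <= 0) by lra.
  apply Rle_plus_epsilon. intros eps Heps.
  assert (HCT : 0 <= C * (T * T)) by (apply Rmult_le_pos; nra).
  destruct (archimed_cor1 (eps / (C * (T * T) + 1))) as [N [HNe HN0]].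
  { apply Rdiv_lt_0_compat; lra. }
  pose proof (HN N HN0).
  assert (C * (T * T) * / INR N <= C * (T * T) * (eps / (C * (T * T) + 1)))
    by (apply Rmult_le_compat_l; lra).
  assert (C * (T * T) * (eps / (C * (T * T) + 1)) <= eps).
  { apply (Rmult_le_reg_r (C * (T * T) + 1)); [lra|].
    replace (C * (T * T) * (eps / (C * (T * T) + 1)) * (C * (T * T) + 1)) with (C * (T * T) * eps)
      by (field; lra). nra. }
  lra.
Qed.

Lemma integrable_bounded m1 m2 (h : R -> nat -> nat -> R) T : 0 <= T ->
  (forall i k, (i < m1)%nat -> (k < m2)%nat -> ex_RInt (fun s => h s i k) 0 T) ->
  exists M, 0 <= M /\
    forall i k u, (i < m1)%nat -> (k < m2)%nat -> 0 <= u <= T -> Rabs (h u i k) <= M.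
Proof.
  intros HT Hint.
  destruct (finite_bound m1 (fun i M => forall k u, (k < m2)%nat -> 0 <= u <= T -> Rabs (h u i k) <= M))
    as [M [HM0 HM]].
  - intros i M M' HMM' H k u Hk Hu. specialize (H k u Hk Hu). lra.
  - intros i Hi.
    destruct (finite_bound m2 (fun k M => forall u, 0 <= u <= T -> Rabs (h u i k) <= M)) as [M [_ HM]].
    + intros k M M' HMM' H u Hu. specialize (H u Hu). lra.
    + intros k Hk. destruct (ex_RInt_ub _ _ _ (Hint i k Hi Hk)) as [M HM].
      exists M. intros u Hu. apply HM. rewrite Rmin_left, Rmax_right by lra. auto.
    + exists M. auto.
  - exists M. split; auto.
Qed.

Lemma qform_euclid_ext n p P a a' b b' :
  (forall i k, (i < p)%nat -> (k < n)%nat -> a i k = a' i k) ->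
  (forall i k, (i < p)%nat -> (k < n)%nat -> b i k = b' i k) ->
  qform (euclid n) p (full p) P a b = qform (euclid n) p (full p) P a' b'.
Proof.
  intros Ha Hb. rewrite !qform_euclid. apply fsum_ext; intros i Hi. apply fsum_ext; intros k Hk.
  rewrite Ha by auto. f_equal. apply fsum_ext; intros j Hj. rewrite Hb; auto.
Qed.

Lemma kron_apply_minus n p Gamma M y1 y2 i k :
  kron_apply n p Gamma M y1 i k - kron_apply n p Gamma M y2 i k =
  kron_apply n p Gamma M (fun j l => y1 j l - y2 j l) i k.
Proof.
  unfold kron_apply. rewrite <- fsum_minus. apply fsum_ext; intros.
  rewrite <- Rmult_minus_distr_l, <- fsum_minus. f_equal. apply fsum_ext; intros; ring.
Qed.

Lemma ex_RInt_kron_apply n p Gamma (Q : R -> nat -> nat -> R) y s t :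
  (forall k l, (k < n)%nat -> (l < n)%nat -> ex_RInt (fun u => Q u k l) s t) ->
  forall i k, (k < n)%nat -> ex_RInt (fun u => kron_apply n p Gamma (Q u) y i k) s t.
Proof.
  intros HQ i k Hk. unfold kron_apply. apply ex_RInt_fsum; intros j Hj.
  apply ex_RInt_scal_l. apply ex_RInt_fsum; intros l Hl.
  apply ex_RInt_scal_r. auto.
Qed.

Section EnergyDecay.
Variables (n p : nat) (Gamma P : nat -> nat -> R) (Q : R -> nat -> nat -> R)
  (x : R -> nat -> nat -> R) (T : R).
Hypotheses (HP : forall i j, P i j = P j i)
  (Hsign : forall u y, 0 <= u ->
     qform (euclid n) p (full p) P (fun i k => kron_apply n p Gamma (Q u) y i k) y <= 0)
  (HQ : forall k l T, (k < n)%nat -> (l < n)%nat -> 0 <= T -> ex_RInt (fun s => Q s k l) 0 T)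
  (Hsol : is_solution n p Gamma Q x) (HT : 0 <= T).

Let f u i k := kron_apply n p Gamma (Q u) (x u) i k.
Let V t := qform (euclid n) p (full p) P (x t) (x t).
Let SG := fsum p (fun i => fsum p (fun j => Rabs (Gamma i j))).
Let SP := fsum p (fun i => fsum p (fun j => Rabs (P i j))).

Lemma solution_increment s t i k : 0 <= s -> s <= t -> (i < p)%nat -> (k < n)%nat ->
  ex_RInt (fun u => f u i k) s t /\ x t i k - x s i k = RInt (fun u => f u i k) s t.
Proof.
  intros Hs Hst Hi Hk.
  destruct (Hsol t ltac:(lra) i k Hi Hk) as [Ht1 Ht2]. destruct (Hsol s Hs i k Hi Hk) as [Hs1 Hs2].
  assert (Hst' : ex_RInt (fun u => f u i k) s t)
    by (apply (@ex_RInt_Chasles_2 R_CompleteNormedModule _ 0 s t); [lra|exact Ht1]).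
  split; auto. rewrite Ht2, Hs2.
  pose proof (@RInt_Chasles R_CompleteNormedModule (fun u => f u i k) 0 s t Hs1 Hst') as E.
  change (RInt (fun u => f u i k) 0 s + RInt (fun u => f u i k) s t = RInt (fun u => f u i k) 0 t) in E.
  unfold f in *. lra.
Qed.

Section Bounds.
Variables (Mq Mf Bx : R).
Hypotheses (HMq0 : 0 <= Mq) (HMf0 : 0 <= Mf) (HBx0 : 0 <= Bx)
  (HMq : forall k l u, (k < n)%nat -> (l < n)%nat -> 0 <= u <= T -> Rabs (Q u k l) <= Mq)
  (HMf : forall i k u, (i < p)%nat -> (k < n)%nat -> 0 <= u <= T -> Rabs (f u i k) <= Mf)
  (HBx : forall i k u, (i < p)%nat -> (k < n)%nat -> 0 <= u <= T -> Rabs (x u i k) <= Bx).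

Lemma solution_lipschitz s t i k : 0 <= s -> s <= t -> t <= T -> (i < p)%nat -> (k < n)%nat ->
  Rabs (x t i k - x s i k) <= (t - s) * Mf.
Proof.
  intros Hs Hst HtT Hi Hk. destruct (solution_increment s t i k Hs Hst Hi Hk) as [Hint ->].
  apply abs_RInt_le_const; auto. intros u Hu. apply HMf; auto; lra.
Qed.

Section Interval.
Variables (s t : R).
Hypotheses (Hs : 0 <= s) (Hst : s <= t) (HtT : t <= T).

(* Freezing [x] at time [s] splits [x t - x s] into an integral [Gi] whose pairing
   with [x s] has the sign of the energy derivative, plus an [O((t-s)^2)] remainder [Ri]. *)
Let g u i k := kron_apply n p Gamma (Q u) (x s) i k.
Let Gi i k := RInt (fun u => g u i k) s t.
Let Ri i k := RInt (fun u => f u i k - g u i k) s t.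

Lemma frozen_integrable i k : (k < n)%nat -> ex_RInt (fun u => g u i k) s t.
Proof.
  intros Hk. apply ex_RInt_kron_apply; auto. intros k' l Hk' Hl.
  apply (@ex_RInt_Chasles_2 R_CompleteNormedModule _ 0 s t); [lra|apply HQ; auto; lra].
Qed.

Lemma increment_split i k : (i < p)%nat -> (k < n)%nat -> x t i k - x s i k = Gi i k + Ri i k.
Proof.
  intros Hi Hk. destruct (solution_increment s t i k Hs Hst Hi Hk) as [Hf Hx].
  pose proof (RInt_minus (fun u => f u i k) (fun u => g u i k) s t Hf (frozen_integrable i k Hk)) as E.
  change (RInt (fun u => f u i k - g u i k) s t =
          RInt (fun u => f u i k) s t - RInt (fun u => g u i k) s t) in E.
  unfold Gi, Ri. rewrite Hx, E. symmetry. apply Rplus_minus.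
Qed.

Lemma frozen_pairing_nonpos : qform (euclid n) p (full p) P Gi (x s) <= 0.
Proof.
  unfold Gi. destruct (qform_euclid_RInt n p P g (x s) s t) as [Hex ->].
  { intros; apply frozen_integrable; auto. }
  apply Rle_trans with (RInt (fun _ => 0) s t); [|right; rewrite RInt_const; apply Rmult_0_r].
  apply RInt_le; auto; [apply ex_RInt_const|]. intros u Hu. apply Hsign. lra.
Qed.

Lemma frozen_abs_le i k : (i < p)%nat -> (k < n)%nat ->
  Rabs (Gi i k) <= (t - s) * (SG * (INR n * (Mq * Bx))).
Proof.
  intros Hi Hk. apply abs_RInt_le_const; auto; [apply frozen_integrable; auto|]. intros u Hu.
  apply kron_apply_abs_le; auto; intros; [apply HMq|apply HBx]; auto; lra.
Qed.

Lemma remainder_abs_le i k : (i < p)%nat -> (k < n)%nat ->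
  Rabs (Ri i k) <= (t - s) * (SG * (INR n * (Mq * ((t - s) * Mf)))).
Proof.
  intros Hi Hk. apply abs_RInt_le_const; auto.
  - apply (ex_RInt_minus (fun u => f u i k) (fun u => g u i k)); [|apply frozen_integrable; auto].
    apply (solution_increment s t i k); auto.
  - intros u Hu. unfold g, f. rewrite kron_apply_minus.
    apply kron_apply_abs_le; auto; [nra|intros; apply HMq; auto; lra|].
    intros j l Hj Hl. eapply Rle_trans; [apply solution_lipschitz; auto; lra|].
    apply Rmult_le_compat_r; lra.
Qed.

Lemma energy_increment_le :
  V t - V s <= (SP * INR n * (SG * (INR n * (Mq * Bx))) * Mf
                + SP * INR n * (SG * (INR n * (Mq * Mf))) * (2 * Bx)) * ((t - s) * (t - s)).
Proof.
  assert (HSP : 0 <= SP) by (apply fsum_nonneg; intros; apply fsum_nonneg; intros; apply Rabs_pos).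
  assert (HSG : 0 <= SG) by (apply fsum_nonneg; intros; apply fsum_nonneg; intros; apply Rabs_pos).
  pose proof (pos_INR n) as Hn0.
  set (D := fun i k => x t i k - x s i k).
  unfold V. rewrite qform_diff_sq by auto.
  rewrite (qform_euclid_ext n p P _ (fun i k => Gi i k + Ri i k) _ (fun i k => x t i k + x s i k))
    by (auto; intros; apply increment_split; auto).
  rewrite qform_plus_l.
  rewrite (qform_euclid_ext n p P Gi Gi _ (fun i k => 2 * x s i k + D i k)) by (auto; intros; unfold D; ring).
  rewrite qform_plus_r, qform_scal_r.
  assert (0 <= (t - s) * (SG * (INR n * (Mq * Bx)))) by (repeat apply Rmult_le_pos; lra).
  pose proof (qform_euclid_abs_le n p P Gi D _ ((t - s) * Mf) H ltac:(nra) frozen_abs_le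
                (fun i k Hi Hk => solution_lipschitz s t i k Hs Hst HtT Hi Hk)) as B1.
  assert (HWb : forall i k, (i < p)%nat -> (k < n)%nat -> Rabs (x t i k + x s i k) <= 2 * Bx).
  { intros i k Hi Hk. eapply Rle_trans; [apply Rabs_triang|].
    pose proof (HBx i k t Hi Hk ltac:(lra)). pose proof (HBx i k s Hi Hk ltac:(lra)). lra. }
  assert (0 <= (t - s) * (SG * (INR n * (Mq * ((t - s) * Mf)))))
    by (repeat apply Rmult_le_pos; lra).
  pose proof (qform_euclid_abs_le n p P Ri _ _ (2 * Bx) H0 ltac:(lra) remainder_abs_le HWb) as B2.
  fold SP in B1, B2. pose proof frozen_pairing_nonpos.
  pose proof (Rle_abs (qform (euclid n) p (full p) P Gi D)).
  pose proof (Rle_abs (qform (euclid n) p (full p) P Ri (fun i k => x t i k + x s i k))).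
  assert (E1 : SP * (INR n * ((t - s) * (SG * (INR n * (Mq * Bx))) * ((t - s) * Mf)))
               = SP * INR n * (SG * (INR n * (Mq * Bx))) * Mf * ((t - s) * (t - s))) by ring.
  assert (E2 : SP * (INR n * ((t - s) * (SG * (INR n * (Mq * ((t - s) * Mf)))) * (2 * Bx)))
               = SP * INR n * (SG * (INR n * (Mq * Mf))) * (2 * Bx) * ((t - s) * (t - s))) by ring.
  lra.
Qed.

End Interval.

End Bounds.

Lemma energy_nonincreasing : V T <= V 0.
Proof.
  destruct (integrable_bounded n n Q T HT (fun k l Hk Hl => HQ k l T Hk Hl HT)) as [Mq [HMq0 HMq]].
  destruct (integrable_bounded p n f T HT (fun i k Hi Hk => proj1 (Hsol T HT i k Hi Hk)))
    as [Mf [HMf0 HMf]].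
  destruct (finite_bound p (fun i M => forall k, (k < n)%nat -> Rabs (x 0 i k) <= M)) as [M0 [HM00 HM0]].
  { intros i M M' HMM' H k Hk. specialize (H k Hk). lra. }
  { intros i Hi. destruct (finite_bound n (fun k M => Rabs (x 0 i k) <= M)) as [M [_ HM]].
    - intros; lra.
    - intros k _. exists (Rabs (x 0 i k)). lra.
    - exists M. auto. }
  set (Bx := M0 + T * Mf).
  assert (HBx : forall i k u, (i < p)%nat -> (k < n)%nat -> 0 <= u <= T -> Rabs (x u i k) <= Bx).
  { intros i k u Hi Hk Hu.
    pose proof (solution_lipschitz Mf HMf 0 u i k ltac:(lra) ltac:(lra) ltac:(lra) Hi Hk).
    pose proof (HM0 i Hi k Hk). replace (x u i k) with (x 0 i k + (x u i k - x 0 i k)) by ring.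
    eapply Rle_trans; [apply Rabs_triang|]. unfold Bx. nra. }
  assert (HSP : 0 <= SP) by (apply fsum_nonneg; intros; apply fsum_nonneg; intros; apply Rabs_pos).
  assert (HSG : 0 <= SG) by (apply fsum_nonneg; intros; apply fsum_nonneg; intros; apply Rabs_pos).
  assert (HBx0 : 0 <= Bx) by (unfold Bx; nra).
  pose proof (pos_INR n).
  apply (le_of_quadratic_increments V (SP * INR n * (SG * (INR n * (Mq * Bx))) * Mf
                                     + SP * INR n * (SG * (INR n * (Mq * Mf))) * (2 * Bx)) T); auto.
  - repeat (apply Rplus_le_le_0_compat || apply Rmult_le_pos); lra.
  - intros s t Hs Hst HtT. apply (energy_increment_le Mq Mf Bx); auto.
Qed.

End EnergyDecay.

Lemma interconnection_subgenerator p Gamma : interconnection p Gamma -> subgenerator p (full p) Gamma.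
Proof.
  intros [Hoff Hdiag]. split.
  - intros i j Hi Hj Hne. apply Nat.ltb_lt in Hi, Hj. apply Hoff; auto.
  - intros i Hi. pose proof Hi as Hi'. apply Nat.ltb_lt in Hi'. rewrite sum_in_full.
    assert (fsum p (Gamma i) = fsum p (fun j => if Nat.eq_dec j i then 0 else Gamma i j) + Gamma i i).
    { rewrite (fsum_ext p (Gamma i) (fun j => (if Nat.eq_dec j i then 0 else Gamma i j)
                                           + (if Nat.eq_dec j i then Gamma i i else 0)))
        by (intros j _; destruct (Nat.eq_dec j i) as [->|]; ring).
      rewrite fsum_plus. f_equal. rewrite (fsum_single p _ i); auto.
      - destruct (Nat.eq_dec i i); [auto|lia].
      - intros j _ Hne. destruct (Nat.eq_dec j i); [lia|auto]. }
    rewrite H, (Hdiag i Hi'). lra.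
Qed.

Lemma sqrt_le_of_sandwich a b lam Lam : 0 < lam -> 0 < Lam -> 0 <= a -> 0 <= b ->
  lam * a <= Lam * b -> sqrt a <= sqrt (Lam / lam) * sqrt b.
Proof.
  intros Hlam HLam Ha Hb H.
  rewrite <- sqrt_mult_alt by (apply Rlt_le, Rdiv_lt_0_compat; auto).
  apply sqrt_le_1_alt. apply (Rmult_le_reg_l lam); auto.
  replace (lam * (Lam / lam * b)) with (Lam * b) by (field; lra). lra.
Qed.

Theorem theorem1 (n p : nat) (Gamma : nat -> nat -> R) :
  interconnection p Gamma ->
  exists alpha : R, 0 < alpha /\
    forall Q : R -> nat -> nat -> R,
      (forall t, 0 <= t -> psd_sym n (Q t)) ->
      (forall k l T, (k < n)%nat -> (l < n)%nat -> 0 <= T ->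
         ex_RInt (fun s => Q s k l) 0 T) ->
      forall x : R -> nat -> nat -> R,
        is_solution n p Gamma Q x ->
        forall t, 0 <= t -> vnorm n p (x t) <= alpha * vnorm n p (x 0).
Proof.
  intros Hic.
  destruct (subgenerator_lyapunov (S (card_in p (full p))) p (full p) Gamma ltac:(lia)
              (within_full p) (interconnection_subgenerator p Gamma Hic))
    as (P & lam & Lam & eps & Hlam & HLam & Heps & HP & HL).
  exists (sqrt (Lam / lam)). split; [apply sqrt_lt_R0, Rdiv_lt_0_compat; auto|].
  intros Q HQ HQi x Hsol t Ht.
  assert (Hsign : forall u y, 0 <= u ->
    qform (euclid n) p (full p) P (fun i k => kron_apply n p Gamma (Q u) y i k) y <= 0).
  { intros u y Hu. destruct (HQ u Hu) as [Hsym Hpos].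
    rewrite (qform_kron_apply n p Gamma P (Q u) Hsym Hpos y HP).
    destruct (HL (quad_inner n (Q u) Hsym Hpos) y) as (_ & _ & Hd).
    pose proof (sqnorm_nonneg (quad_inner n (Q u) Hsym Hpos) p (full p) (mx_apply p (full p) Gamma y)).
    nra. }
  pose proof (energy_nonincreasing n p Gamma P Q x t HP Hsign HQi Hsol Ht) as Hdecay.
  destruct (HL (euclid n) (x t)) as [Hlow _]. destruct (HL (euclid n) (x 0)) as [_ [Hup _]].
  rewrite !vnorm_sqnorm. apply sqrt_le_of_sandwich; auto using sqnorm_nonneg. lra.
Qed.
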